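(* Let $\mathbf{k}=(k_1,\ldots,k_n)$ be an admissible index and $\beta\in\mathbb{C}$ with $\mathrm{Re}\,\beta>0$. Let $D(\beta)=\{\alpha\in\mathbb{C}:|\alpha-\beta|<\mathrm{Re}\,\beta/2\}$. Then the series \[ \sum_{l=0}^{\infty}(\alpha-\beta)^l\sum_{i=0}^{l}\sum_{\substack{i_1+\cdots+i_{n-1}=i\\ i_j\in\mathbb{Z}_{\ge0}}}S_{l-i}(k_1,\{1\}^{i_1},k_2,\ldots,k_{n-1},\{1\}^{i_{n-1}},k_n;\alpha) \] and \[ \sum_{l=0}^{\infty}(\alpha-\beta)^l\sum_{i=0}^{l}\sum_{\mathbf{i}^{(1)}_{k_1-1}+\cdots+\mathbf{i}^{(n)}_{k_n-2}=i}S_{l-i}\bigl(k_1+\mathbf{i}^{(1)}_{k_1-1},\ldots,k_{n-1}+\mathbf{i}^{(n-1)}_{k_{n-1}-1},k_n+\mathbf{i}^{(n)}_{k_n-2};\alpha\bigr) \] converge absolutely for $\alpha\in D(\beta)$ and uniformly on every compact subset of $D(\beta)$.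
   Context: An index $(k_1,\ldots,k_n)$ is admissible if all $k_i$ are positive integers and $k_n\ge2$. For $a\in\mathbb{C}$, $(a)_0=1$ and $(a)_m=a(a+1)\cdots(a+m-1)$ for $m\ge1$. For an admissible index and $\mathrm{Re}\,\alpha>0$, \[ Z(\mathbf{k};\alpha)=\sum_{0\le m_1<\cdots<m_n}\frac{(\alpha)_{m_1}}{m_1!}\frac{m_n!}{(\alpha)_{m_n+1}}\frac{1}{(m_1+\alpha)^{k_1}\cdots(m_{n-1}+\alpha)^{k_{n-1}}(m_n+\alpha)^{k_n-1}}, \] and $S_l(\mathbf{k};\alpha):=\sum_{l_1+\cdots+l_n=l,\ l_i\in\mathbb{Z}_{\ge0}}Z(k_1+l_1,\ldots,k_n+l_n;\alpha)$. $\{1\}^a$ denotes $a$ consecutive entries equal to $1$. For $m\ge1$, $r\ge0$, $\mathbf{i}^{(m)}_r:=i^{(m)}_1+\cdots+i^{(m)}_r$ (equal to $0$ if $r=0$); the sum over $\mathbf{i}^{(1)}_{k_1-1}+\cdots+\mathbf{i}^{(n)}_{k_n-2}=i$ runs over all tuples of nonnegative integers $(i^{(1)}_1,\ldots,i^{(1)}_{k_1-1},\ldots,i^{(n)}_1,\ldots,i^{(n)}_{k_n-2})$ with total sum $i$. *)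

From Stdlib Require Import Reals List Arith.
From Coquelicot Require Import Coquelicot.
Import ListNotations.
Open Scope R_scope.

Definition clsum (s : list C) : C := fold_right Cplus (RtoC 0) s.
Definition csum (f : nat -> C) (n : nat) : C := clsum (map f (seq 0 n)).

Fixpoint poch (a : C) (m : nat) : C :=
  match m with
  | O => RtoC 1
  | S m' => Cmult (poch a m') (Cplus a (RtoC (INR m')))
  end.

Definition cfact (m : nat) : C := RtoC (INR (fact m)).

Definition admissible (k : list nat) : Prop :=
  k <> [] /\ (forall x, In x k -> (1 <= x)%nat) /\ (2 <= last k 0%nat)%nat.

(* For ks = [k_r; ...; k_1] (reversed) and m,
   lower alpha ks m = sum_{0<=m_1<...<m_r<m} (alpha)_{m_1}/m_1!
                       * prod_{j=1}^r 1/(m_j+alpha)^{k_j},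
   and for r = 0 it is (alpha)_m/m!. *)
Fixpoint lower (alpha : C) (ks : list nat) (m : nat) : C :=
  match ks with
  | [] => Cdiv (poch alpha m) (cfact m)
  | k :: ks' =>
      csum (fun j => Cmult (Cinv (Cpow (Cplus (RtoC (INR j)) alpha) k))
                           (lower alpha ks' j)) m
  end.

(* the m_n-th term of the series defining Z(k;alpha) *)
Definition Zterm (k : list nat) (alpha : C) (m : nat) : C :=
  Cmult (Cdiv (cfact m) (poch alpha (S m)))
   (Cmult (Cinv (Cpow (Cplus (RtoC (INR m)) alpha) (pred (last k 0%nat))))
          (lower alpha (rev (removelast k)) m)).

(* Z(k;alpha) = sum over 0<=m_1<...<m_n; summed by m_n (the inner sums
   over m_1<...<m_{n-1}<m_n are finite).  The complex value of the series
   is taken componentwise with Coquelicot's Series. *)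
Definition Zfun (k : list nat) (alpha : C) : C :=
  (Series (fun m => fst (Zterm k alpha m)), Series (fun m => snd (Zterm k alpha m))).

Fixpoint comps (n l : nat) : list (list nat) :=
  match n with
  | O => match l with O => [[]] | _ => [] end
  | S n' => flat_map (fun j => map (cons j) (comps n' (l - j))) (seq 0 (S l))
  end.

Fixpoint addl (k t : list nat) : list nat :=
  match k, t with
  | x :: k', y :: t' => (x + y)%nat :: addl k' t'
  | _, _ => k
  end.

Definition Ssum (l : nat) (k : list nat) (alpha : C) : C :=
  clsum (map (fun t => Zfun (addl k t) alpha) (comps (length k) l)).

(* (k_1,{1}^{i_1},k_2,...,k_{n-1},{1}^{i_{n-1}},k_n) for is = [i_1;...;i_{n-1}] *)
Fixpoint ins_ones (k is : list nat) : list nat :=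
  match k with
  | [] => []
  | [x] => [x]
  | x :: k' => x :: repeat 1%nat (hd 0%nat is) ++ ins_ones k' (tl is)
  end.

Definition coef1 (k : list nat) (alpha : C) (l : nat) : C :=
  csum (fun i =>
    clsum (map (fun is => Ssum (l - i) (ins_ones k is) alpha)
               (comps (pred (length k)) i))) (S l).

Fixpoint blocks (bl t : list nat) : list nat :=
  match bl with
  | [] => []
  | b :: bl' => list_sum (firstn b t) :: blocks bl' (skipn b t)
  end.

Definition blens (k : list nat) : list nat :=
  map (fun x => (x - 1)%nat) (removelast k) ++ [(last k 0%nat - 2)%nat].

(* inner coefficient of the second series: sum over all tuples
   (i^{(1)}_1,...,i^{(n)}_{k_n-2}) of total sum i *)
Definition coef2 (k : list nat) (alpha : C) (l : nat) : C :=
  csum (fun i =>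
    clsum (map (fun t => Ssum (l - i) (addl k (blocks (blens k) t)) alpha)
               (comps (list_sum (blens k)) i))) (S l).

Definition sterm (coef : list nat -> C -> nat -> C) (k : list nat) (beta alpha : C)
  (l : nat) : C := Cmult (Cpow (Cminus alpha beta) l) (coef k alpha l).

Definition compactC (K : C -> Prop) : Prop :=
  forall (I : Type) (U : I -> C -> Prop),
    (forall i, open (U i)) -> (forall z, K z -> exists i, U i z) ->
    exists s : list I, forall z, K z -> exists i, In i s /\ U i z.

Definition unif_conv_series (K : C -> Prop) (a : nat -> C -> C) : Prop :=
  exists f : C -> C, forall eps : R, 0 < eps ->
    exists N : nat, forall n : nat, (N <= n)%nat -> forall z, K z ->
      Cmod (Cminus (f z) (csum (fun l => a l z) n)) < eps.

Definition Dbeta (beta : C) (alpha : C) : Prop :=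
  Cmod (Cminus alpha beta) < Re beta / 2.

From Stdlib Require Import Reals List Lra Lia Arith ZArith.
From Coquelicot Require Import Coquelicot.
Import ListNotations.
Open Scope R_scope.

(* Fix r < a with a = Re beta - r, so that Re alpha >= a whenever |alpha - beta| <= r.  Replacing
   alpha by a in every factor of a Z-value gives a positive real majorant, since |alpha + j| >= a + j.
   Summed over all increments with weight r^l, raising an exponent k_j by one costs a factor
   r/(m_j + a) < 1, so the increments sum to geometric series which turn 1/(m_j + a) into
   1/(m_j + a - r); the arbitrarily many inserted ones of the first series are handled by the
   explicit solution Phi of the resulting linear recursion.  Everything is then bounded by a
   constant times m!/(a)_(m+1) * 1/(m + a - r) * (a)_m/(a - r)_m * (e + 1)_m/m!, where
   e = (a - r)^2/(a - r + 1), and the sum of these over m telescopes because e < a - r.  This gives one summable majorant for all alpha in the closed disc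
   |alpha - beta| <= r < Re beta / 2, and every compact subset of D(beta) lies in such a disc. *)

(** * Finite sums *)

Fixpoint sum_list {A} (f : A -> R) (s : list A) : R :=
  match s with [] => 0 | x :: s' => f x + sum_list f s' end.

Definition sum_lt (f : nat -> R) (n : nat) : R := sum_list f (seq 0 n).

Lemma sum_list_app {A} (f : A -> R) s t : sum_list f (s ++ t) = sum_list f s + sum_list f t.
Proof. induction s; simpl; lra. Qed.

Lemma sum_list_map {A B} (f : B -> R) (g : A -> B) s : sum_list f (map g s) = sum_list (fun x => f (g x)) s.
Proof. induction s; simpl; congruence. Qed.

Lemma sum_list_flat_map {A B} (f : B -> R) (g : A -> list B) s :
  sum_list f (flat_map g s) = sum_list (fun x => sum_list f (g x)) s.
Proof. induction s; simpl; rewrite ?sum_list_app; congruence. Qed.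

Lemma sum_list_plus {A} (f g : A -> R) s : sum_list (fun x => f x + g x) s = sum_list f s + sum_list g s.
Proof. induction s; simpl; lra. Qed.

Lemma sum_list_scal {A} (c : R) (f : A -> R) s : sum_list (fun x => c * f x) s = c * sum_list f s.
Proof. induction s; simpl; lra. Qed.

Lemma sum_list_ext {A} (f g : A -> R) s : (forall x, In x s -> f x = g x) -> sum_list f s = sum_list g s.
Proof. induction s; simpl; intros H; auto. rewrite H, IHs; auto. Qed.

Lemma sum_list_le {A} (f g : A -> R) s : (forall x, In x s -> f x <= g x) -> sum_list f s <= sum_list g s.
Proof. induction s; simpl; intros H. lra. apply Rplus_le_compat. apply H; auto. apply IHs; auto. Qed.

Lemma sum_list_nonneg {A} (f : A -> R) s : (forall x, In x s -> 0 <= f x) -> 0 <= sum_list f s.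
Proof. intros H. apply Rle_trans with (sum_list (fun _ => 0) s). clear H; induction s; simpl; lra. apply sum_list_le; auto. Qed.

Lemma sum_list_swap {A B} (g : A -> B -> R) s t :
  sum_list (fun x => sum_list (g x) t) s = sum_list (fun y => sum_list (fun x => g x y) s) t.
Proof.
  induction s; simpl. induction t; simpl; lra.
  rewrite IHs, <- sum_list_plus. reflexivity.
Qed.

Lemma sum_lt_S f n : sum_lt f (S n) = sum_lt f n + f n.
Proof. unfold sum_lt. rewrite seq_S, sum_list_app. simpl. lra. Qed.

Lemma sum_lt_0 f : sum_lt f 0 = 0.
Proof. reflexivity. Qed.

Lemma sum_list_seq_shift f s n : sum_list f (seq (S s) n) = sum_list (fun i => f (S i)) (seq s n).
Proof. revert s; induction n; intros s; simpl; auto. rewrite IHn. reflexivity. Qed.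

Lemma sum_lt_Sl f n : sum_lt f (S n) = f 0%nat + sum_lt (fun i => f (S i)) n.
Proof. unfold sum_lt. simpl. rewrite sum_list_seq_shift. reflexivity. Qed.

Lemma sum_lt_ext f g n : (forall i, (i < n)%nat -> f i = g i) -> sum_lt f n = sum_lt g n.
Proof. intros H; apply sum_list_ext. intros x Hx; apply in_seq in Hx; apply H; lia. Qed.

Lemma sum_lt_le f g n : (forall i, (i < n)%nat -> f i <= g i) -> sum_lt f n <= sum_lt g n.
Proof. intros H; apply sum_list_le. intros x Hx; apply in_seq in Hx; apply H; lia. Qed.

Lemma sum_lt_nonneg f n : (forall i, (i < n)%nat -> 0 <= f i) -> 0 <= sum_lt f n.
Proof. intros H; apply sum_list_nonneg. intros x Hx; apply in_seq in Hx; apply H; lia. Qed.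

Lemma sum_lt_mono f m n : (forall i, 0 <= f i) -> (m <= n)%nat -> sum_lt f m <= sum_lt f n.
Proof. intros H Hmn; induction Hmn. apply Rle_refl. rewrite sum_lt_S. specialize (H m0). lra. Qed.

Lemma sum_lt_scal c f n : sum_lt (fun i => c * f i) n = c * sum_lt f n.
Proof. apply sum_list_scal. Qed.

Lemma sum_lt_scal_r c f n : sum_lt f n * c = sum_lt (fun i => f i * c) n.
Proof. rewrite Rmult_comm, <- sum_lt_scal. apply sum_lt_ext; intros; ring. Qed.

Lemma sum_lt_plus f g n : sum_lt (fun i => f i + g i) n = sum_lt f n + sum_lt g n.
Proof. apply sum_list_plus. Qed.

Lemma sum_lt_triangle (g : nat -> nat -> R) L :
  sum_lt (fun s => sum_lt (fun j => g j (s - j)%nat) (S s)) L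
  = sum_lt (fun j => sum_lt (g j) (L - j)) L.
Proof.
  induction L. reflexivity.
  rewrite sum_lt_S, IHL.
  transitivity (sum_lt (fun j => sum_lt (g j) (L - j) + g j (L - j)%nat) (S L)).
  - rewrite sum_lt_plus. rewrite sum_lt_S with (n:=L) (f := fun j => sum_lt (g j) (L - j)).
    rewrite Nat.sub_diag, sum_lt_0. lra.
  - apply sum_lt_ext. intros i Hi. replace (S L - i)%nat with (S (L - i)) by lia.
    rewrite sum_lt_S. reflexivity.
Qed.

Lemma sum_lt_triangle_le (g : nat -> nat -> R) L : (forall j s, 0 <= g j s) ->
  sum_lt (fun s => sum_lt (fun j => g j (s - j)%nat) (S s)) L
  <= sum_lt (fun j => sum_lt (g j) L) L.
Proof.
  intros H. rewrite sum_lt_triangle. apply sum_lt_le. intros i Hi. apply sum_lt_mono; auto; lia.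
Qed.

Lemma sum_lt_geom q n : 0 <= q < 1 -> sum_lt (fun j => q ^ j) n <= / (1 - q).
Proof.
  intros Hq. assert (H: sum_lt (fun j => q ^ j) n * (1 - q) = 1 - q ^ n).
  { induction n. unfold sum_lt; simpl; lra. rewrite sum_lt_S. simpl. nra. }
  assert (0 <= q ^ n) by (apply pow_le; lra).
  apply Rmult_le_reg_r with (1 - q). lra. rewrite H, Rinv_l; lra.
Qed.

Fixpoint box (N L : nat) : list (list nat) :=
  match N with O => [[]] | S N' => flat_map (fun j => map (cons j) (box N' L)) (seq 0 L) end.

Lemma sum_list_box_S f N L :
  sum_list f (box (S N) L) = sum_lt (fun j => sum_list (fun t => f (j :: t)) (box N L)) L.
Proof. simpl. rewrite sum_list_flat_map. unfold sum_lt. apply sum_list_ext. intros. apply sum_list_map. Qed.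

Lemma sum_lt_sum_list_swap {A} (g : nat -> A -> R) n s :
  sum_lt (fun j => sum_list (g j) s) n = sum_list (fun x => sum_lt (fun j => g j x) n) s.
Proof. unfold sum_lt. apply sum_list_swap. Qed.

Lemma sum_lt_zero n : sum_lt (fun _ => 0) n = 0.
Proof. induction n. reflexivity. rewrite sum_lt_S, IHn. lra. Qed.

Lemma sum_list_box_snoc f N L :
  sum_list f (box (S N) L) = sum_list (fun t => sum_lt (fun j => f (t ++ [j])) L) (box N L).
Proof.
  revert f. induction N; intros f.
  - rewrite sum_list_box_S. simpl. rewrite Rplus_0_r. unfold sum_lt. apply sum_list_ext. intros; simpl. lra.
  - rewrite sum_list_box_S. rewrite sum_list_box_S.
    apply sum_lt_ext. intros j _. rewrite (IHN (fun t => f (j :: t))). reflexivity.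
Qed.

Lemma sum_list_box_rev f N L :
  sum_list (fun t => f (rev t)) (box N L) = sum_list f (box N L).
Proof.
  revert f. induction N; intros f.
  - reflexivity.
  - rewrite sum_list_box_S.
    rewrite (sum_lt_ext _ (fun j => sum_list (fun t => f (t ++ [j])) (box N L))).
    2:{ intros j _. rewrite <- (IHN (fun t => f (t ++ [j]))). apply sum_list_ext. intros; reflexivity. }
    rewrite sum_lt_sum_list_swap. rewrite sum_list_box_snoc. reflexivity.
Qed.

Lemma box_length N L t : In t (box N L) -> length t = N.
Proof.
  revert t; induction N; intros t H; simpl in H.
  - destruct H as [<-|[]]; reflexivity.
  - apply in_flat_map in H. destruct H as [j [_ H]]. apply in_map_iff in H.
    destruct H as [t' [<- H]]. simpl. f_equal. auto.
Qed.

Lemma comps_S N s : comps (S N) s = flat_map (fun j => map (cons j) (comps N (s - j))) (seq 0 (S s)).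
Proof. reflexivity. Qed.

Lemma in_comps N s t : In t (comps N s) -> length t = N /\ list_sum t = s.
Proof.
  revert s t; induction N; intros s t H.
  - simpl in H. destruct s. destruct H as [<-|[]]; auto. destruct H.
  - rewrite comps_S in H. apply in_flat_map in H. destruct H as [j [Hj H]]. apply in_map_iff in H.
    destruct H as [t' [<- H]]. apply in_seq in Hj. apply IHN in H. simpl. lia.
Qed.

Lemma sum_comps_le_box f N L : (forall t, 0 <= f t) ->
  sum_lt (fun s => sum_list f (comps N s)) L <= sum_list f (box N L).
Proof.
  revert f L; induction N; intros f L Hf.
  - destruct L. simpl. unfold sum_lt; simpl. specialize (Hf []). lra.
    rewrite sum_lt_Sl. simpl. rewrite sum_lt_zero. specialize (Hf []). lra.
  - rewrite sum_list_box_S.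
    rewrite (sum_lt_ext _ (fun s => sum_lt (fun j => sum_list (fun t => f (j :: t)) (comps N (s - j))) (S s))).
    2:{ intros s _. rewrite comps_S, sum_list_flat_map. unfold sum_lt. apply sum_list_ext. intros. apply sum_list_map. }
    eapply Rle_trans.
    apply (sum_lt_triangle_le (fun j s => sum_list (fun t => f (j :: t)) (comps N s))).
    { intros; apply sum_list_nonneg; auto. }
    apply sum_lt_le. intros j _. apply IHN. auto.
Qed.

Lemma sum_box_geom q N L :
  sum_list (fun t => q ^ list_sum t) (box N L) = (sum_lt (fun j => q ^ j) L) ^ N.
Proof.
  induction N. simpl. lra.
  rewrite sum_list_box_S.
  rewrite (sum_lt_ext _ (fun j => (sum_lt (fun j => q ^ j) L) ^ N * q ^ j)).
  - rewrite sum_lt_scal, <- tech_pow_Rmult. change (sum_lt (pow q) L) with (sum_lt (fun j => q ^ j) L). apply Rmult_comm.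
  - intros j _. rewrite <- IHN, Rmult_comm, <- sum_list_scal. apply sum_list_ext. intros t _. simpl. rewrite pow_add. reflexivity.
Qed.

Lemma sum_lt_swap (g : nat -> nat -> R) n L :
  sum_lt (fun j => sum_lt (g j) n) L = sum_lt (fun p => sum_lt (fun j => g j p) L) n.
Proof. unfold sum_lt. apply sum_list_swap. Qed.

Lemma sum_double_comps_le (r : R) (N1 : nat) (N2 : list nat -> nat) (F : list nat -> list nat -> R) L :
  0 <= r -> (forall u t, 0 <= F u t) ->
  sum_lt (fun l => r ^ l * sum_lt (fun i => sum_list (fun u => sum_list (fun t => F u t) (comps (N2 u) (l - i))) (comps N1 i)) (S l)) L
  <= sum_list (fun u => r ^ list_sum u * sum_list (fun t => r ^ list_sum t * F u t) (box (N2 u) L)) (box N1 L).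
Proof.
  intros Hr HF.
  set (G := fun i s => r ^ i * r ^ s * sum_list (fun u => sum_list (fun t => F u t) (comps (N2 u) s)) (comps N1 i)).
  rewrite (sum_lt_ext _ (fun l => sum_lt (fun i => G i (l - i)%nat) (S l))).
  2:{ intros l _. rewrite <- sum_lt_scal. apply sum_lt_ext. intros i Hi. unfold G.
      rewrite <- pow_add. replace (i + (l - i))%nat with l by lia. reflexivity. }
  eapply Rle_trans. apply sum_lt_triangle_le.
  { intros; unfold G. apply Rmult_le_pos. apply Rmult_le_pos; apply pow_le; lra.
    apply sum_list_nonneg; intros; apply sum_list_nonneg; auto. }
  unfold G.
  rewrite (sum_lt_ext _ (fun i => sum_list (fun u => r ^ list_sum u *
             sum_lt (fun s => sum_list (fun t => r ^ list_sum t * F u t) (comps (N2 u) s)) L) (comps N1 i))).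
  2:{ intros i _. rewrite (sum_lt_ext _ (fun s => sum_list (fun u => r ^ list_sum u *
          sum_list (fun t => r ^ list_sum t * F u t) (comps (N2 u) s)) (comps N1 i))).
      rewrite sum_lt_sum_list_swap. apply sum_list_ext. intros u _. rewrite sum_lt_scal. reflexivity.
      intros s _. rewrite <- sum_list_scal. apply sum_list_ext. intros u Hu.
      apply in_comps in Hu. destruct Hu as [_ Hu]. rewrite Hu.
      rewrite Rmult_assoc. f_equal. rewrite <- sum_list_scal. apply sum_list_ext. intros t Ht.
      apply in_comps in Ht. destruct Ht as [_ Ht]. rewrite Ht. reflexivity. }
  eapply Rle_trans.
  apply (sum_comps_le_box (fun u => r ^ list_sum u * sum_lt (fun s => sum_list (fun t => r ^ list_sum t * F u t) (comps (N2 u) s)) L) N1 L).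
  { intros u. apply Rmult_le_pos. apply pow_le; lra. apply sum_lt_nonneg; intros. apply sum_list_nonneg; intros.
    apply Rmult_le_pos; auto. apply pow_le; lra. }
  apply sum_list_le. intros u _. apply Rmult_le_compat_l. apply pow_le; lra.
  apply (sum_comps_le_box (fun t => r ^ list_sum t * F u t)). intros; apply Rmult_le_pos; auto; apply pow_le; lra.
Qed.

(** * Index lists *)

Lemma length_addl k t : length (addl k t) = length k.
Proof. revert t; induction k; intros [|y t]; simpl; auto. Qed.

Lemma addl_app k1 k2 t1 t2 : length k1 = length t1 -> addl (k1 ++ k2) (t1 ++ t2) = addl k1 t1 ++ addl k2 t2.
Proof.
  revert t1; induction k1; intros [|y t1] H; simpl in *; try congruence.
  rewrite IHk1; auto.
Qed.

Lemma rev_addl k t : length t = length k -> rev (addl k t) = addl (rev k) (rev t).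
Proof.
  revert t; induction k; intros [|y t] H; simpl in *; try congruence.
  rewrite addl_app. simpl. rewrite IHk; auto. rewrite !length_rev; auto. lia.
Qed.

Lemma list_sum_rev t : list_sum (rev t) = list_sum t.
Proof. induction t; simpl; auto. rewrite list_sum_app. simpl. lia. Qed.

Lemma Forall_removelast (P : nat -> Prop) l : List.Forall P l -> List.Forall P (removelast l).
Proof.
  intros H. destruct l. simpl; auto.
  rewrite (app_removelast_last 0%nat (l:=n :: l)) in H by congruence.
  apply Forall_app in H. tauto.
Qed.

Lemma ins_ones_nonnil k is : k <> [] -> ins_ones k is <> [].
Proof. destruct k as [|x [|y k]]; simpl; congruence. Qed.

Lemma Forall_ins_ones k is : List.Forall (fun x => (1 <= x)%nat) k -> List.Forall (fun x => (1 <= x)%nat) (ins_ones k is).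
Proof.
  revert is; induction k as [|x k IH]; intros is H. simpl; auto.
  inversion H; subst. destruct k as [|y k]. simpl; auto.
  change (ins_ones (x :: y :: k) is) with (x :: repeat 1%nat (hd 0%nat is) ++ ins_ones (y :: k) (tl is)).
  constructor; auto. apply Forall_app. split. apply Forall_forall. intros z Hz. apply repeat_spec in Hz. lia.
  apply IH; auto.
Qed.

Lemma last_app_neq_nil (l l' : list nat) d : l' <> [] -> last (l ++ l') d = last l' d.
Proof.
  intros H. rewrite (app_removelast_last d H), app_assoc, !last_last. reflexivity.
Qed.

Lemma last_ins_ones k is : last (ins_ones k is) 0%nat = last k 0%nat.
Proof.
  revert is; induction k as [|x k IH]; intros is. reflexivity.
  destruct k as [|y k]. reflexivity.
  change (ins_ones (x :: y :: k) is) with ((x :: repeat 1%nat (hd 0%nat is)) ++ ins_ones (y :: k) (tl is)).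
  rewrite last_app_neq_nil by (apply ins_ones_nonnil; congruence). rewrite IH. reflexivity.
Qed.

Lemma rev_removelast_ins_ones x y k i is :
  rev (removelast (ins_ones (x :: y :: k) (i :: is))) =
  rev (removelast (ins_ones (y :: k) is)) ++ repeat 1%nat i ++ [x].
Proof.
  change (ins_ones (x :: y :: k) (i :: is)) with ((x :: repeat 1%nat i) ++ ins_ones (y :: k) is).
  rewrite removelast_app by (apply ins_ones_nonnil; congruence).
  simpl. rewrite rev_app_distr, rev_repeat, <- app_assoc. reflexivity.
Qed.

Lemma blocks_sum bl u : length u = list_sum bl -> list_sum (blocks bl u) = list_sum u.
Proof.
  revert u; induction bl; intros u H; simpl in *.
  destruct u; simpl in *; auto; lia.
  rewrite IHbl. rewrite <- (firstn_skipn a u) at 3. rewrite list_sum_app. reflexivity.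
  rewrite length_skipn. lia.
Qed.

Lemma blocks_length bl u : length (blocks bl u) = length bl.
Proof. revert u; induction bl; intros; simpl; auto. Qed.

Lemma blens_length k : k <> [] -> length (blens k) = length k.
Proof.
  intros H. unfold blens. rewrite length_app, length_map. simpl.
  rewrite (app_removelast_last 0%nat H) at 2. rewrite length_app. simpl. reflexivity.
Qed.

Lemma hd_rev (k : list nat) : k <> [] -> hd 0%nat (rev k) = last k 0%nat.
Proof. intros H. rewrite (app_removelast_last 0%nat H) at 1. rewrite rev_app_distr. reflexivity. Qed.

Lemma tl_rev (k : list nat) : k <> [] -> tl (rev k) = rev (removelast k).
Proof. intros H. rewrite (app_removelast_last 0%nat H) at 1. rewrite rev_app_distr. reflexivity. Qed.

Lemma addl_nonnil (k t : list nat) : k <> [] -> addl k t <> [].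
Proof. intros H E. apply (f_equal (@length nat)) in E. rewrite length_addl in E. destruct k; simpl in *; congruence. Qed.

Lemma In_addl k t x : In x (addl k t) -> exists y, In y k /\ (y <= x)%nat.
Proof.
  revert t; induction k as [|y k IH]; intros [|z t] Hx.
  - contradiction.
  - contradiction.
  - exists x. auto.
  - destruct Hx as [<-|Hx].
    + exists y. split; [left; auto | lia].
    + destruct (IH t Hx) as [w [Hw Hwx]]. exists w. split; [right|]; auto.
Qed.

Lemma last_addl_ge k t : (last k 0 <= last (addl k t) 0)%nat.
Proof.
  revert t; induction k as [|y k IH]; intros [|z t]; simpl; auto.
  destruct k as [|y' k].
  - simpl. lia.
  - specialize (IH t). destruct t as [|z' t]; simpl in *; auto.
Qed.

Lemma admissible_addl k t : admissible k -> admissible (addl k t).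
Proof.
  intros [Hk [Hf Hl]]. split; [|split].
  - apply addl_nonnil; auto.
  - intros x Hx. destruct (In_addl k t x Hx) as [y [Hy Hyx]]. specialize (Hf y Hy). lia.
  - pose proof (last_addl_ge k t). lia.
Qed.

Lemma admissible_ins_ones k is : admissible k -> admissible (ins_ones k is).
Proof.
  intros [Hk [Hf Hl]]. split; [|split].
  - apply ins_ones_nonnil; auto.
  - apply Forall_forall, Forall_ins_ones, Forall_forall. auto.
  - rewrite last_ins_ones. auto.
Qed.

Lemma addl_assoc (k b t : list nat) : length b = length k -> length t = length k ->
  addl (addl k b) t = addl k (addl b t).
Proof.
  revert b t; induction k; intros [|x b] [|y t] H1 H2; simpl in *; try congruence.
  rewrite IHk by lia. f_equal. lia.
Qed.

Lemma list_sum_addl (b t : list nat) : length b = length t -> list_sum (addl b t) = (list_sum b + list_sum t)%nat.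
Proof.
  revert t; induction b; intros [|y t] H; simpl in *; try lia.
  rewrite IHb by lia. lia.
Qed.

(** * A real majorant of the Z-terms *)

Fixpoint pochR (a : R) (m : nat) : R :=
  match m with O => 1 | S m' => pochR a m' * (a + INR m') end.

Definition xinv (a : R) (j : nat) : R := / (INR j + a).

Definition pfact (a : R) (j : nat) : R := pochR a j / INR (fact j).

Fixpoint lowerR (ws : list (nat -> R)) (g : nat -> R) (m : nat) : R :=
  match ws with [] => g m | w :: ws' => sum_lt (fun j => w j * lowerR ws' g j) m end.

Definition xinv_pow (a : R) (e : nat) : nat -> R := fun j => xinv a j ^ e.

Definition zpref (a : R) (m : nat) : R := INR (fact m) / pochR a (S m).

(* [Zmaj a (rev k) m] majorises the m-th summand of Z(k; alpha) when a <= Re alpha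
   (Cmod_Zterm_le); the index is stored reversed, so that its head is k_n. *)
Definition Zmaj (a : R) (kr : list nat) (m : nat) : R :=
  zpref a m * xinv a m ^ pred (hd 0%nat kr) * lowerR (map (xinv_pow a) (tl kr)) (pfact a) m.

Lemma pochR_pos a m : 0 < a -> 0 < pochR a m.
Proof. intros Ha; induction m; simpl. lra. apply Rmult_lt_0_compat; auto. pose proof (pos_INR m); lra. Qed.

Lemma xinv_pos a j : 0 < a -> 0 < xinv a j.
Proof. intros; unfold xinv; apply Rinv_0_lt_compat; pose proof (pos_INR j); lra. Qed.

Lemma pfact_pos a j : 0 < a -> 0 < pfact a j.
Proof. intros; unfold pfact. apply Rdiv_lt_0_compat. apply pochR_pos; auto. apply lt_0_INR, lt_O_fact. Qed.

Lemma zpref_pos a m : 0 < a -> 0 < zpref a m.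
Proof. intros; unfold zpref. apply Rdiv_lt_0_compat. apply lt_0_INR, lt_O_fact. apply pochR_pos; auto. Qed.

Lemma lowerR_nonneg ws g m : (forall w, In w ws -> forall j, 0 <= w j) -> (forall j, 0 <= g j) -> 0 <= lowerR ws g m.
Proof.
  revert m; induction ws; intros m Hw Hg; simpl; auto.
  apply sum_lt_nonneg. intros i _. apply Rmult_le_pos. apply Hw; simpl; auto. apply IHws; auto.
  intros; apply Hw; simpl; auto.
Qed.

Lemma lowerR_app ws1 ws2 g m : lowerR (ws1 ++ ws2) g m = lowerR ws1 (lowerR ws2 g) m.
Proof. revert m; induction ws1; intros m; simpl; auto. apply sum_lt_ext; intros; rewrite IHws1; auto. Qed.

Lemma lowerR_ext ws g h m : (forall j, g j = h j) -> lowerR ws g m = lowerR ws h m.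
Proof. revert m; induction ws; intros m H; simpl; auto. apply sum_lt_ext; intros; rewrite IHws; auto. Qed.

Lemma lowerR_sum_list {A} ws (f : A -> nat -> R) s m :
  lowerR ws (fun j => sum_list (fun x => f x j) s) m = sum_list (fun x => lowerR ws (f x) m) s.
Proof.
  revert m; induction ws as [|w ws IHws]; intros m; simpl; auto.
  rewrite (sum_lt_ext _ (fun j => sum_list (fun x => w j * lowerR ws (f x) j) s)).
  unfold sum_lt. apply sum_list_swap.
  intros i _. rewrite IHws, sum_list_scal. reflexivity.
Qed.

Lemma lowerR_scal ws c g m : lowerR ws (fun j => c * g j) m = c * lowerR ws g m.
Proof.
  revert m; induction ws; intros m; simpl; auto. rewrite <- sum_lt_scal. apply sum_lt_ext; intros.
  rewrite IHws. ring.
Qed.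

Lemma Zmaj_nonneg a kr m : 0 < a -> 0 <= Zmaj a kr m.
Proof.
  intros Ha. unfold Zmaj. apply Rmult_le_pos. apply Rmult_le_pos. apply Rlt_le, zpref_pos; auto.
  apply pow_le, Rlt_le, xinv_pos; auto.
  apply lowerR_nonneg. intros w Hw j. apply in_map_iff in Hw. destruct Hw as [e [<- _]].
  apply pow_le, Rlt_le, xinv_pos; auto. intros; apply Rlt_le, pfact_pos; auto.
Qed.

Lemma Cmod_clsum {A} (f : A -> C) s : Cmod (clsum (map f s)) <= sum_list (fun x => Cmod (f x)) s.
Proof.
  induction s; simpl. rewrite Cmod_0; lra.
  eapply Rle_trans. apply Cmod_triangle. lra.
Qed.

Lemma Cmod_csum f n : Cmod (csum f n) <= sum_lt (fun x => Cmod (f x)) n.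
Proof. apply Cmod_clsum. Qed.

Section ZtermBound.
Variable alpha : C.
Variable a : R.
Hypothesis Ha : 0 < a.
Hypothesis Hre : a <= Re alpha.

Lemma Cmod_shift_ge j : a + INR j <= Cmod (Cplus alpha (RtoC (INR j))).
Proof.
  eapply Rle_trans. 2: apply re_le_Cmod. unfold Re. simpl. unfold Re in Hre.
  pose proof (pos_INR j). rewrite Rabs_right; lra.
Qed.

Lemma Cmod_INR_plus_ge j : a + INR j <= Cmod (Cplus (RtoC (INR j)) alpha).
Proof. rewrite Cplus_comm. apply Cmod_shift_ge. Qed.

Lemma poch_Cmod_ratio_le m d : Cmod (poch alpha m) * pochR a (m + d) <= pochR a m * Cmod (poch alpha (m + d)).
Proof.
  induction d. rewrite Nat.add_0_r; lra.
  rewrite Nat.add_succ_r. simpl. rewrite Cmod_mult.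
  pose proof (Cmod_shift_ge (m + d)). pose proof (pos_INR (m+d)).
  pose proof (Cmod_ge_0 (poch alpha m)). pose proof (pochR_pos a m Ha).
  pose proof (Cmod_ge_0 (poch alpha (m+d))). pose proof (pochR_pos a (m+d) Ha).
  apply Rle_trans with (pochR a m * Cmod (poch alpha (m + d)) * (a + INR (m + d))).
  rewrite <- Rmult_assoc. apply Rmult_le_compat_r; lra.
  rewrite Rmult_assoc. apply Rmult_le_compat_l; [lra|]. apply Rmult_le_compat_l; lra.
Qed.

Lemma poch_neq0 m : poch alpha m <> 0%C.
Proof.
  apply Cmod_gt_0. pose proof (poch_Cmod_ratio_le 0 m). simpl in H.
  rewrite Cmod_1 in H. pose proof (pochR_pos a m Ha). nra.
Qed.

Lemma Cmod_inv_pow_le j k : Cmod (Cinv (Cpow (Cplus (RtoC (INR j)) alpha) k)) <= xinv a j ^ k.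
Proof.
  rewrite Cmod_inv. rewrite Cmod_pow. unfold xinv. rewrite <- pow_inv.
  apply pow_incr. split. apply Rlt_le, Rinv_0_lt_compat. pose proof (Cmod_INR_plus_ge j); pose proof (pos_INR j); lra.
  apply Rinv_le_contravar. pose proof (pos_INR j); lra. pose proof (Cmod_INR_plus_ge j); lra.
  intros H. apply (f_equal Cmod) in H. rewrite Cmod_pow, Cmod_0 in H.
  assert (0 < Cmod (Cplus (RtoC (INR j)) alpha) ^ k). apply pow_lt. pose proof (Cmod_INR_plus_ge j); pose proof (pos_INR j); lra. lra.
Qed.

Lemma Cmod_lower_le ks m M : (m <= S M)%nat ->
  Cmod (lower alpha ks m) * pochR a (S M) <= lowerR (map (xinv_pow a) ks) (pfact a) m * Cmod (poch alpha (S M)).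
Proof.
  revert m M; induction ks; intros m M Hm.
  - cbn [lower lowerR map]. assert (E: S M = (m + (S M - m))%nat) by lia. rewrite E. unfold Cdiv, cfact, pfact. rewrite Cmod_mult, Cmod_inv, Cmod_R, Rabs_right.
    2: apply Rle_ge, pos_INR.
    2: { intro H. injection H. pose proof (lt_0_INR _ (lt_O_fact m)). lra. }
    pose proof (poch_Cmod_ratio_le m (S M - m)). pose proof (lt_0_INR _ (lt_O_fact m)).
    unfold Rdiv. apply Rle_trans with (/ INR (fact m) * (Cmod (poch alpha m) * pochR a (m + (S M - m)))).
    right; ring. apply Rle_trans with (/ INR (fact m) * (pochR a m * Cmod (poch alpha (m + (S M - m))))).
    apply Rmult_le_compat_l; auto. apply Rlt_le, Rinv_0_lt_compat; auto. right; ring.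
  - cbn [lower lowerR map]. eapply Rle_trans. apply Rmult_le_compat_r. apply Rlt_le, pochR_pos; auto. apply Cmod_csum.
    rewrite !sum_lt_scal_r. apply sum_lt_le. intros j Hj. cbn beta.
    rewrite Cmod_mult.
    pose proof (IHks j M ltac:(lia)). pose proof (Cmod_inv_pow_le j a0).
    pose proof (Cmod_ge_0 (lower alpha ks j)). pose proof (Cmod_ge_0 (poch alpha (S M))).
    pose proof (pochR_pos a (S M) Ha). pose proof (Cmod_ge_0 (Cinv (Cpow (Cplus (RtoC (INR j)) alpha) a0))).
    apply Rle_trans with (Cmod (Cinv (Cpow (Cplus (RtoC (INR j)) alpha) a0)) * (Cmod (lower alpha ks j) * pochR a (S M))).
    right; ring.
    apply Rle_trans with (xinv a j ^ a0 * (lowerR (map (xinv_pow a) ks) (pfact a) j * Cmod (poch alpha (S M)))).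
    apply Rmult_le_compat; auto. apply Rmult_le_pos; auto. lra. change (xinv_pow a a0 j) with (xinv a j ^ a0). right; ring.
Qed.

Lemma Cmod_Zterm_le k m : k <> [] -> Cmod (Zterm k alpha m) <= Zmaj a (rev k) m.
Proof.
  intros Hk. unfold Zterm, Zmaj. rewrite hd_rev, tl_rev by auto.
  rewrite !Cmod_mult. unfold Cdiv, cfact. rewrite Cmod_mult, Cmod_inv by apply poch_neq0.
  rewrite Cmod_R, Rabs_right by apply Rle_ge, pos_INR.
  pose proof (Cmod_lower_le (rev (removelast k)) m m ltac:(lia)).
  pose proof (Cmod_inv_pow_le m (pred (last k 0%nat))).
  pose proof (Cmod_ge_0 (poch alpha (S m))).
  assert (0 < Cmod (poch alpha (S m))) by (apply Cmod_gt_0, poch_neq0).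
  pose proof (pochR_pos a (S m) Ha). pose proof (lt_0_INR _ (lt_O_fact m)).
  pose proof (Cmod_ge_0 (lower alpha (rev (removelast k)) m)).
  pose proof (Cmod_ge_0 (Cinv (Cpow (Cplus (RtoC (INR m)) alpha) (pred (last k 0%nat))))).
  unfold zpref. unfold Rdiv.
  set (P := Cmod (poch alpha (S m))) in *. set (Q := pochR a (S m)) in *.
  set (W := lowerR _ _ _) in *. set (Lw := Cmod (lower _ _ _)) in *.
  set (X := Cmod (Cinv _)) in *.
  assert (HLW : Lw / P <= W / Q).
  { apply Rmult_le_reg_r with (P * Q). nra. unfold Rdiv.
    replace (Lw * / P * (P * Q)) with (Lw * Q) by (field; lra).
    replace (W * / Q * (P * Q)) with (W * P) by (field; lra). auto. }
  unfold Rdiv in HLW.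
  apply Rle_trans with (INR (fact m) * X * (Lw * / P)). right; ring.
  apply Rle_trans with (INR (fact m) * xinv a m ^ pred (last k 0%nat) * (W * / Q)). 2: right; ring.
  apply Rmult_le_compat; auto. apply Rmult_le_pos; auto. lra.
  apply Rmult_le_pos; auto. apply Rlt_le, Rinv_0_lt_compat; auto.
  apply Rmult_le_compat_l; lra.
Qed.

End ZtermBound.

Lemma pochR_mono c d j : 0 < c <= d -> pochR c j <= pochR d j.
Proof.
  intros H. induction j; simpl. lra. pose proof (pochR_pos c j ltac:(lra)). pose proof (pos_INR j).
  apply Rmult_le_compat; lra.
Qed.

Lemma pochR_shift e m : pochR e (S m) = e * pochR (e + 1) m.
Proof.
  induction m. simpl. ring.
  change (pochR e (S (S m))) with (pochR e (S m) * (e + INR (S m))).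
  rewrite IHm. cbn [pochR]. rewrite S_INR. ring.
Qed.

(** * Summing the majorant over increments and inserted ones *)

Section Majorant.
Variables a r : R.
Hypothesis Ha : 0 < a.
Hypothesis Hr : 0 <= r < a.

Definition gap := a - r.

(* e < a - r makes the sum of [dom] telescope, and a - r <= e + 1 gives [pfact a <= scoef]. *)
Definition epar := gap * gap / (gap + 1).

Definition kappa := 1 + / a.

Definition yinv (j : nat) : R := / (INR j + gap).

Definition pochratio (j : nat) : R := pochR a j / pochR gap j.

Definition tcoef (j : nat) : R := pochR (epar + 1) j / INR (fact j).

Definition scoef (j : nat) : R := pochratio j * tcoef j.

(* Closed-form solution of h_j = sum_(m<j) y_m (g_m + r h_m). *)
Definition Phi (g : nat -> R) (j : nat) : R := pochratio j * sum_lt (fun m => g m / ((INR m + a) * pochratio m)) j.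

Lemma gap_pos : 0 < gap. Proof. unfold gap; lra. Qed.

Lemma epar_pos : 0 < epar. Proof. unfold epar; pose proof gap_pos. apply Rdiv_lt_0_compat; nra. Qed.

Lemma epar_lt_gap : epar < gap.
Proof. unfold epar; pose proof gap_pos. apply Rmult_lt_reg_r with (gap + 1). lra.
  unfold Rdiv. rewrite Rmult_assoc, Rinv_l by lra. nra. Qed.

Lemma gap_le_epar_1 : gap <= epar + 1.
Proof. unfold epar; pose proof gap_pos. apply Rmult_le_reg_r with (gap + 1). lra.
  rewrite Rmult_plus_distr_r. unfold Rdiv. rewrite Rmult_assoc, Rinv_l by lra. nra. Qed.

Lemma kappa_pos : 0 < kappa. Proof. unfold kappa. pose proof (Rinv_0_lt_compat a Ha). lra. Qed.

Lemma kappa_bound m : INR m + 1 <= kappa * (INR m + a).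
Proof.
  unfold kappa. pose proof (pos_INR m). assert (/a*a=1) by (field; lra). pose proof (Rinv_0_lt_compat a Ha). nra.
Qed.

Lemma yinv_pos j : 0 < yinv j.
Proof. unfold yinv; pose proof gap_pos; pose proof (pos_INR j); apply Rinv_0_lt_compat; lra. Qed.

Lemma pochratio_pos j : 0 < pochratio j.
Proof. unfold pochratio. apply Rdiv_lt_0_compat; apply pochR_pos; auto. apply gap_pos. Qed.

Lemma tcoef_pos j : 0 < tcoef j.
Proof. unfold tcoef. apply Rdiv_lt_0_compat. apply pochR_pos. pose proof epar_pos; lra. apply lt_0_INR, lt_O_fact. Qed.

Lemma scoef_pos j : 0 < scoef j.
Proof. unfold scoef. apply Rmult_lt_0_compat. apply pochratio_pos. apply tcoef_pos. Qed.

Lemma xinv_le_yinv j : xinv a j <= yinv j.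
Proof. unfold xinv, yinv, gap. pose proof (pos_INR j). apply Rinv_le_contravar; lra. Qed.

Lemma xinv_le_inv j : xinv a j <= / a.
Proof. unfold xinv. pose proof (pos_INR j). apply Rinv_le_contravar; lra. Qed.

Lemma Phi_recurrence g j : Phi g j = sum_lt (fun m => yinv m * g m) j + sum_lt (fun m => r * yinv m * Phi g m) j.
Proof.
  induction j. unfold Phi. rewrite !sum_lt_0. lra.
  rewrite !sum_lt_S.
  enough (Phi g (S j) = Phi g j + yinv j * g j + r * yinv j * Phi g j) by lra.
  unfold Phi. rewrite sum_lt_S. unfold pochratio. simpl pochR. unfold yinv.
  pose proof (pochR_pos a j Ha). pose proof (pochR_pos gap j gap_pos). pose proof gap_pos. pose proof (pos_INR j).
  unfold gap in *. field. repeat split; lra.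
Qed.

Lemma Phi_nonneg g j : (forall m, 0 <= g m) -> 0 <= Phi g j.
Proof.
  intros H. unfold Phi. apply Rmult_le_pos. apply Rlt_le, pochratio_pos. apply sum_lt_nonneg. intros.
  apply Rdiv_le_0_compat; auto. apply Rmult_lt_0_compat. pose proof (pos_INR i); lra. apply pochratio_pos.
Qed.

Lemma Phi_mono g h j : (forall m, g m <= h m) -> Phi g j <= Phi h j.
Proof.
  intros H. unfold Phi. apply Rmult_le_compat_l. apply Rlt_le, pochratio_pos. apply sum_lt_le. intros.
  unfold Rdiv. apply Rmult_le_compat_r; auto. apply Rlt_le, Rinv_0_lt_compat, Rmult_lt_0_compat.
  pose proof (pos_INR i); lra. apply pochratio_pos.
Qed.

Lemma tcoef_S j : tcoef (S j) = tcoef j + epar * tcoef j / (INR j + 1).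
Proof.
  unfold tcoef. simpl pochR. rewrite fact_simpl, mult_INR, S_INR.
  pose proof (lt_0_INR _ (lt_O_fact j)). pose proof (pos_INR j). field. lra.
Qed.

Lemma sum_tcoef_le j : sum_lt (fun m => tcoef m / (INR m + a)) j <= kappa / epar * (tcoef j - 1).
Proof.
  induction j. rewrite sum_lt_0. unfold tcoef. simpl. unfold Rdiv. rewrite Rinv_1. lra.
  rewrite sum_lt_S, tcoef_S. pose proof epar_pos. pose proof kappa_pos. pose proof (tcoef_pos j).
  pose proof (kappa_bound j). pose proof (pos_INR j).
  assert (tcoef j / (INR j + a) <= kappa / epar * (epar * tcoef j / (INR j + 1))).
  { unfold Rdiv. replace (kappa * / epar * (epar * tcoef j * / (INR j + 1))) with (tcoef j * (kappa / (INR j + 1))) by (field; lra).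
    apply Rmult_le_compat_l. lra.
    apply Rle_trans with ((INR j + 1) * / (INR j + 1) * / (INR j + a)).
    right; field; lra.
    apply Rle_trans with (kappa * (INR j + a) * / (INR j + 1) * / (INR j + a)). 2: right; field; lra.
    apply Rmult_le_compat_r. apply Rlt_le, Rinv_0_lt_compat; lra.
    apply Rmult_le_compat_r. apply Rlt_le, Rinv_0_lt_compat; lra. lra. }
  lra.
Qed.

Lemma Phi_le_scoef g A j : 0 <= A -> (forall m, g m <= A * scoef m) -> Phi g j <= A * (kappa / epar) * scoef j.
Proof.
  intros HA H. apply Rle_trans with (Phi (fun m => A * scoef m) j). apply Phi_mono; auto.
  unfold Phi, scoef. pose proof (pochratio_pos j).
  rewrite (sum_lt_ext _ (fun m => A * (tcoef m / (INR m + a)))).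
  2:{ intros i _. pose proof (pochratio_pos i). pose proof (pos_INR i). field. lra. }
  rewrite sum_lt_scal.
  pose proof (sum_tcoef_le j). pose proof kappa_pos. pose proof epar_pos. pose proof (tcoef_pos j).
  assert (A * sum_lt (fun m => tcoef m / (INR m + a)) j <= A * (kappa / epar * tcoef j)).
  { apply Rmult_le_compat_l; auto. assert (0 <= kappa / epar) by (apply Rlt_le, Rdiv_lt_0_compat; auto). nra. }
  apply Rle_trans with (pochratio j * (A * (kappa / epar * tcoef j))). apply Rmult_le_compat_l; lra. right; ring.
Qed.

Lemma pfact_le_scoef j : pfact a j <= scoef j.
Proof.
  unfold pfact, scoef, pochratio, tcoef. pose proof (pochR_pos a j Ha). pose proof (pochR_pos gap j gap_pos).
  pose proof (lt_0_INR _ (lt_O_fact j)). pose proof (pochR_mono gap (epar + 1) j (conj gap_pos gap_le_epar_1)).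
  apply Rle_trans with (pochR a j / pochR gap j * pochR gap j / INR (fact j)).
  right; field; lra. unfold Rdiv. rewrite !Rmult_assoc. apply Rmult_le_compat_l. lra.
  apply Rmult_le_compat_l. apply Rlt_le, Rinv_0_lt_compat; lra.
  apply Rmult_le_compat_r. apply Rlt_le, Rinv_0_lt_compat; lra. lra.
Qed.

Definition dom (m : nat) : R := zpref a m * yinv m * scoef m.

Definition dom_bound := kappa * (1 + epar) / epar * / (gap - epar).

Lemma dom_nonneg m : 0 <= dom m.
Proof.
  pose proof (zpref_pos a m Ha). pose proof (yinv_pos m). pose proof (scoef_pos m).
  unfold dom. apply Rmult_le_pos; [apply Rmult_le_pos|]; lra.
Qed.

Lemma dom_le_telescoping m : dom m <= kappa * (1 + epar) / epar * (pochR epar m / pochR gap (S m)).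
Proof.
  pose proof epar_pos. pose proof gap_pos. pose proof kappa_pos. pose proof (pos_INR m).
  pose proof (pochR_pos a m Ha). pose proof (pochR_pos gap m gap_pos). pose proof (pochR_pos epar m epar_pos).
  pose proof (lt_0_INR _ (lt_O_fact m)).
  assert (E1 : pochR (epar + 1) m = pochR epar m * (epar + INR m) / epar).
  { pose proof (pochR_shift epar m). simpl in H7. rewrite H7. field. lra. }
  unfold dom.
  assert (E : zpref a m * yinv m * scoef m = pochR epar m * (epar + INR m) / (epar * (INR m + a) * pochR gap (S m))).
  { unfold zpref, yinv, scoef, pochratio, tcoef. rewrite E1. simpl pochR. field. repeat split; lra. }
  rewrite E. simpl pochR.
  pose proof (kappa_bound m).
  assert (epar + INR m <= (1 + epar) * (kappa * (INR m + a))).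
  { apply Rle_trans with ((1 + epar) * (INR m + 1)). nra. apply Rmult_le_compat_l; lra. }
  apply Rle_trans with ((1 + epar) * (kappa * (INR m + a)) * pochR epar m / (epar * (INR m + a) * (pochR gap m * (gap + INR m)))).
  unfold Rdiv. rewrite (Rmult_comm (pochR epar m) (epar + INR m)). apply Rmult_le_compat_r.
  apply Rlt_le, Rinv_0_lt_compat. apply Rmult_lt_0_compat. nra. nra.
  apply Rmult_le_compat_r; lra.
  right; field; repeat split; lra.
Qed.

Lemma sum_telescoping_le M : sum_lt (fun m => pochR epar m / pochR gap (S m)) M <= / (gap - epar) * (1 - pochR epar M / pochR gap M).
Proof.
  pose proof epar_pos. pose proof gap_pos. pose proof epar_lt_gap.
  induction M. rewrite sum_lt_0. simpl. unfold Rdiv. rewrite Rinv_1. lra.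
  rewrite sum_lt_S. pose proof (pochR_pos gap M gap_pos). pose proof (pochR_pos epar M epar_pos). pose proof (pos_INR M).
  enough (pochR epar M / pochR gap (S M) = / (gap - epar) * (pochR epar M / pochR gap M - pochR epar (S M) / pochR gap (S M))) by lra.
  simpl pochR. field. repeat split; lra.
Qed.

Lemma sum_dom_le M : sum_lt dom M <= dom_bound.
Proof.
  pose proof epar_pos. pose proof gap_pos. pose proof epar_lt_gap. pose proof kappa_pos.
  apply Rle_trans with (sum_lt (fun m => kappa * (1 + epar) / epar * (pochR epar m / pochR gap (S m))) M).
  apply sum_lt_le; intros; apply dom_le_telescoping.
  rewrite sum_lt_scal. unfold dom_bound. apply Rmult_le_compat_l.
  apply Rlt_le, Rdiv_lt_0_compat; nra.
  eapply Rle_trans. apply sum_telescoping_le. pose proof (pochR_pos gap M gap_pos). pose proof (pochR_pos epar M epar_pos).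
  assert (0 <= pochR epar M / pochR gap M) by (apply Rlt_le, Rdiv_lt_0_compat; lra).
  assert (0 < / (gap - epar)) by (apply Rinv_0_lt_compat; lra). nra.
Qed.

Lemma sum_geom_xinv_le m e0 L : (1 <= e0)%nat ->
  sum_lt (fun j => r ^ j * xinv a m ^ (e0 + j)) L <= xinv a m ^ (e0 - 1) * yinv m.
Proof.
  intros He. pose proof (xinv_pos a m Ha). pose proof (pos_INR m). pose proof gap_pos.
  assert (Hq : 0 <= r * xinv a m < 1).
  { split. apply Rmult_le_pos; lra. unfold xinv. apply Rmult_lt_reg_r with (INR m + a). lra.
    rewrite Rmult_assoc, Rinv_l by lra. lra. }
  rewrite (sum_lt_ext _ (fun j => xinv a m ^ e0 * (r * xinv a m) ^ j)).
  2:{ intros. rewrite pow_add, Rpow_mult_distr. ring. }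
  rewrite sum_lt_scal. pose proof (sum_lt_geom _ L Hq).
  destruct e0 as [|e1]; [lia|]. replace (S e1 - 1)%nat with e1 by lia. simpl (xinv a m ^ S e1).
  pose proof (pow_le (xinv a m) e1 ltac:(lra)).
  apply Rle_trans with (xinv a m * xinv a m ^ e1 * / (1 - r * xinv a m)).
  apply Rmult_le_compat_l. nra. auto.
  right. unfold yinv, xinv, gap. field. repeat split; try lra.
Qed.

Lemma xinv_pow_le e j : (1 <= e)%nat -> xinv a j ^ e <= (/ a) ^ (e - 1) * yinv j.
Proof.
  intros He. destruct e as [|e1]; [lia|]. replace (S e1 - 1)%nat with e1 by lia. simpl (xinv a j ^ S e1).
  pose proof (xinv_pos a j Ha). pose proof (xinv_le_yinv j). pose proof (xinv_le_inv j).
  rewrite Rmult_comm. apply Rmult_le_compat; auto. apply pow_le; lra. lra.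
  apply pow_incr; lra.
Qed.

Lemma sum_yinv_le_Phi g j : (forall m, 0 <= g m) -> sum_lt (fun m => yinv m * g m) j <= Phi g j.
Proof.
  intros H. rewrite Phi_recurrence. assert (0 <= sum_lt (fun m => r * yinv m * Phi g m) j).
  apply sum_lt_nonneg. intros. apply Rmult_le_pos. apply Rmult_le_pos. lra. apply Rlt_le, yinv_pos.
  apply Phi_nonneg; auto. lra.
Qed.

Definition wgeom (e : nat) : nat -> R := fun j => xinv a j ^ (e - 1) * yinv j.

Lemma wgeom_pos e j : 0 <= wgeom e j.
Proof. unfold wgeom. apply Rmult_le_pos. apply pow_le, Rlt_le, xinv_pos; auto. apply Rlt_le, yinv_pos. Qed.

Lemma wgeom_le e j : wgeom e j <= (/ a) ^ (e - 1) * yinv j.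
Proof. unfold wgeom. apply Rmult_le_compat_r. apply Rlt_le, yinv_pos. apply pow_incr.
  split. apply Rlt_le, xinv_pos; auto. apply xinv_le_inv. Qed.

Lemma map_wgeom_nonneg ks : forall w, In w (map wgeom ks) -> forall j, 0 <= w j.
Proof. intros w Hw j. apply in_map_iff in Hw. destruct Hw as [e [<- _]]. apply wgeom_pos. Qed.

Lemma map_xinv_pow_nonneg ks : forall w, In w (map (xinv_pow a) ks) -> forall j, 0 <= w j.
Proof. intros w Hw j. apply in_map_iff in Hw. destruct Hw as [e [<- _]]. apply pow_le, Rlt_le, xinv_pos; auto. Qed.

Lemma sum_incr_lowerR_le ks L g m : List.Forall (fun x => (1 <= x)%nat) ks -> (forall j, 0 <= g j) ->
  sum_list (fun t => r ^ list_sum t * lowerR (map (xinv_pow a) (addl ks t)) g m) (box (length ks) L)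
  <= lowerR (map wgeom ks) g m.
Proof.
  revert m; induction ks as [|e ks IH]; intros m Hks Hg.
  - simpl. lra.
  - inversion Hks; subst. simpl length. rewrite sum_list_box_S. cbn [addl map lowerR list_sum].
    rewrite (sum_lt_ext _ (fun j => sum_lt (fun p => r ^ j * xinv_pow a (e + j) p *
        sum_list (fun t => r ^ list_sum t * lowerR (map (xinv_pow a) (addl ks t)) g p) (box (length ks) L)) m)).
    2:{ intros j _. symmetry.
        rewrite (sum_lt_ext _ (fun p => sum_list (fun t => r ^ j * xinv_pow a (e + j) p * (r ^ list_sum t * lowerR (map (xinv_pow a) (addl ks t)) g p)) (box (length ks) L))).
        2:{ intros p _. rewrite sum_list_scal. reflexivity. }
        rewrite sum_lt_sum_list_swap. apply sum_list_ext. intros t _. simpl list_sum. rewrite pow_add, <- sum_lt_scal. apply sum_lt_ext. intros; ring. }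
    rewrite sum_lt_swap. apply sum_lt_le. intros p _.
    rewrite <- sum_lt_scal_r.
    assert (0 <= sum_list (fun t => r ^ list_sum t * lowerR (map (xinv_pow a) (addl ks t)) g p) (box (length ks) L)).
    { apply sum_list_nonneg. intros. apply Rmult_le_pos. apply pow_le; lra. apply lowerR_nonneg; auto. apply map_xinv_pow_nonneg. }
    apply Rmult_le_compat; auto. apply sum_lt_nonneg; intros. apply Rmult_le_pos. apply pow_le; lra.
    apply pow_le, Rlt_le, xinv_pos; auto.
    unfold xinv_pow. apply (sum_geom_xinv_le p e L); auto.
Qed.

Lemma sum_incr_Zmaj_le kr L m : (2 <= hd 0%nat kr)%nat -> List.Forall (fun x => (1 <= x)%nat) (tl kr) ->
  sum_list (fun t => r ^ list_sum t * Zmaj a (addl kr t) m) (box (length kr) L)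
  <= zpref a m * xinv a m ^ (hd 0%nat kr - 2) * yinv m * lowerR (map wgeom (tl kr)) (pfact a) m.
Proof.
  intros Hk Hks. destruct kr as [|K ks]. simpl in Hk; lia. cbn [hd tl] in Hk, Hks |- *. change (length (K :: ks)) with (S (length ks)).
  rewrite sum_list_box_S. unfold Zmaj. cbn [addl hd tl].
  rewrite (sum_lt_ext _ (fun j => zpref a m * (r ^ j * xinv a m ^ (pred K - 1 + 1 + j)) *
     sum_list (fun t => r ^ list_sum t * lowerR (map (xinv_pow a) (addl ks t)) (pfact a) m) (box (length ks) L))).
  2:{ intros j _. rewrite <- !sum_list_scal. apply sum_list_ext. intros t _. simpl list_sum.
      replace (pred (K + j)) with (pred K - 1 + 1 + j)%nat by lia. rewrite pow_add. ring. }
  rewrite <- sum_lt_scal_r, sum_lt_scal.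
  pose proof (sum_incr_lowerR_le ks L (pfact a) m Hks (fun j => Rlt_le _ _ (pfact_pos a j Ha))).
  pose proof (sum_geom_xinv_le m (pred K - 1 + 1) L ltac:(lia)).
  replace (pred K - 1 + 1 - 1)%nat with (K - 2)%nat in H0 by lia.
  pose proof (zpref_pos a m Ha).
  assert (0 <= sum_list (fun t => r ^ list_sum t * lowerR (map (xinv_pow a) (addl ks t)) (pfact a) m) (box (length ks) L)).
  { apply sum_list_nonneg. intros. apply Rmult_le_pos. apply pow_le; lra. apply lowerR_nonneg; auto. apply map_xinv_pow_nonneg.
    intros; apply Rlt_le, pfact_pos; auto. }
  rewrite Rmult_assoc. rewrite (Rmult_assoc (zpref a m)). rewrite (Rmult_assoc (zpref a m)).
  apply Rmult_le_compat_l. lra.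
  apply Rmult_le_compat; auto. apply sum_lt_nonneg; intros. apply Rmult_le_pos. apply pow_le; lra.
  apply pow_le, Rlt_le, xinv_pos; auto.
Qed.

Lemma sum_ones_le G h L j : (forall j, 0 <= G j) -> (forall j, 0 <= h j) ->
  (forall j, G j + sum_lt (fun p => r * yinv p * h p) j <= h j) ->
  sum_lt (fun i => r ^ i * lowerR (repeat (wgeom 1) i) G j) L <= h j.
Proof.
  intros HG Hh H. revert j; induction L; intros j.
  - rewrite sum_lt_0. auto.
  - rewrite sum_lt_Sl. cbn [repeat lowerR pow]. rewrite Rmult_1_l.
    rewrite (sum_lt_ext _ (fun i => sum_lt (fun p => r * wgeom 1 p * (r ^ i * lowerR (repeat (wgeom 1) i) G p)) j)).
    2:{ intros i _. cbn [repeat lowerR pow]. rewrite <- sum_lt_scal. apply sum_lt_ext. intros; ring. }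
    rewrite sum_lt_swap. eapply Rle_trans. 2: apply (H j). apply Rplus_le_compat_l.
    apply sum_lt_le. intros p _. rewrite sum_lt_scal. replace (wgeom 1 p) with (yinv p) by (unfold wgeom; simpl; ring).
    apply Rmult_le_compat_l.
    apply Rmult_le_pos. lra. apply Rlt_le, yinv_pos. apply IHL.
Qed.

Lemma sum_ones_wgeom_le_scoef x g A L j : 0 <= A -> (forall j, 0 <= g j <= A * scoef j) ->
  sum_lt (fun i => r ^ i * lowerR (repeat (wgeom 1) i) (lowerR [wgeom x] g) j) L
  <= (/ a) ^ (x - 1) * A * (kappa / epar) * scoef j.
Proof.
  intros HA Hg.
  assert (Hpa : 0 <= (/ a) ^ (x - 1)) by (apply pow_le, Rlt_le, Rinv_0_lt_compat; auto).
  set (h := Phi (fun p => (/ a) ^ (x - 1) * g p)).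
  apply Rle_trans with (h j).
  - apply sum_ones_le.
    + intros j0. apply lowerR_nonneg. intros w [<-|[]]; apply wgeom_pos. intros; apply Hg.
    + intros j0. apply Phi_nonneg. intros; apply Rmult_le_pos; auto; apply Hg.
    + intros j0. unfold h at 2. rewrite Phi_recurrence. apply Rplus_le_compat_r. simpl.
      apply sum_lt_le. intros p _.
      pose proof (wgeom_le x p). pose proof (Hg p). pose proof (yinv_pos p). nra.
  - apply Phi_le_scoef. nra. intros m. rewrite Rmult_assoc. apply Rmult_le_compat_l; auto. apply Hg.
Qed.

Lemma sum_ones_lowerR_le k : k <> [] -> List.Forall (fun x => (1 <= x)%nat) k -> exists D, 0 <= D /\
  (forall g A L m, 0 <= A -> (forall j, 0 <= g j <= A * scoef j) ->
  sum_list (fun is => r ^ list_sum is * lowerR (map wgeom (rev (removelast (ins_ones k is)))) g m)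
       (box (pred (length k)) L) <= A * D * scoef m).
Proof.
  induction k as [|x k IH]; intros Hk Hf. congruence.
  inversion Hf; subst. destruct k as [|y k].
  - exists 1. split. lra. intros g A L m HA Hg. simpl. rewrite Rmult_1_l, Rmult_1_r, Rplus_0_r. apply Hg.
  - destruct (IH ltac:(congruence) H2) as [D' [HD' IH']].
    assert (Hc : 0 <= (/ a) ^ (x - 1) * (kappa / epar)).
    { apply Rmult_le_pos. apply pow_le, Rlt_le, Rinv_0_lt_compat; auto.
      apply Rlt_le, Rdiv_lt_0_compat. apply kappa_pos. apply epar_pos. }
    exists ((/ a) ^ (x - 1) * (kappa / epar) * D'). split. apply Rmult_le_pos; auto.
    intros g A L m HA Hg.
    change (pred (length (x :: y :: k))) with (S (pred (length (y :: k)))).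
    rewrite sum_list_box_S.
    set (G' := fun j => sum_lt (fun i => r ^ i * lowerR (repeat (wgeom 1) i) (lowerR [wgeom x] g) j) L).
    rewrite (sum_lt_ext _ (fun i => sum_list (fun is => r ^ list_sum is * (r ^ i *
         lowerR (map wgeom (rev (removelast (ins_ones (y :: k) is))))
           (lowerR (repeat (wgeom 1) i) (lowerR [wgeom x] g)) m))
         (box (pred (length (y :: k))) L))).
    2:{ intros i _. apply sum_list_ext. intros is _. rewrite rev_removelast_ins_ones.
        simpl list_sum. rewrite pow_add, !map_app, !lowerR_app, map_repeat.
        rewrite (lowerR_ext _ (lowerR (repeat (wgeom 1) i ++ map wgeom [x]) g)
                              (lowerR (repeat (wgeom 1) i) (lowerR [wgeom x] g))).
        ring. intros; apply lowerR_app. }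
    rewrite sum_lt_sum_list_swap.
    rewrite (sum_list_ext _ (fun is => r ^ list_sum is * lowerR (map wgeom (rev (removelast (ins_ones (y :: k) is)))) G' m)).
    2:{ intros is _. rewrite sum_lt_scal. f_equal. unfold G', sum_lt. rewrite lowerR_sum_list.
        apply sum_list_ext. intros. rewrite lowerR_scal. reflexivity. }
    eapply Rle_trans. apply (IH' G' ((/ a) ^ (x - 1) * A * (kappa / epar)) L m).
    { rewrite (Rmult_comm _ A), Rmult_assoc. apply Rmult_le_pos; auto. }
    { intros j; split.
      - apply sum_lt_nonneg. intros. apply Rmult_le_pos. apply pow_le; lra. apply lowerR_nonneg.
        + intros w Hw. apply repeat_spec in Hw. subst. apply wgeom_pos.
        + intros j0. apply lowerR_nonneg. intros w [<-|[]]; apply wgeom_pos. intros; apply Hg.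
      - apply sum_ones_wgeom_le_scoef; auto. }
    right; ring.
Qed.


Lemma lowerR_incr_le ks d g m : length d = length ks -> (forall j, 0 <= g j) ->
  lowerR (map (xinv_pow a) (addl ks d)) g m <= (/ a) ^ list_sum d * lowerR (map (xinv_pow a) ks) g m.
Proof.
  revert d m; induction ks as [|e ks IH]; intros [|j d] m Hl Hg; simpl in Hl; try congruence.
  - simpl. lra.
  - cbn [addl map lowerR list_sum]. rewrite <- sum_lt_scal. apply sum_lt_le. intros p _.
    unfold xinv_pow at 1 3. rewrite pow_add.
    pose proof (IH d p ltac:(lia) Hg).
    assert (0 <= xinv a p ^ e) by (apply pow_le, Rlt_le, xinv_pos; auto).
    assert (xinv a p ^ j <= (/ a) ^ j) by (apply pow_incr; split; [apply Rlt_le, xinv_pos; auto| apply xinv_le_inv]).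
    assert (0 <= xinv a p ^ j) by (apply pow_le, Rlt_le, xinv_pos; auto).
    assert (0 <= lowerR (map (xinv_pow a) (addl ks d)) g p) by (apply lowerR_nonneg; auto; apply map_xinv_pow_nonneg; auto).
    apply Rle_trans with (xinv a p ^ e * (/ a) ^ j * ((/ a) ^ list_sum d * lowerR (map (xinv_pow a) ks) g p)).
    apply Rmult_le_compat; auto. apply Rmult_le_pos; auto. apply Rmult_le_compat_l; auto. simpl list_sum. rewrite pow_add. right; ring.
Qed.

Lemma Zmaj_incr_le k d m : k <> [] -> length d = length k -> (1 <= last k 0%nat)%nat ->
  Zmaj a (rev (addl k d)) m <= (/ a) ^ list_sum d * Zmaj a (rev k) m.
Proof.
  intros Hk Hl Hlast. rewrite rev_addl by auto. rewrite <- list_sum_rev.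
  assert (E: rev k = hd 0%nat (rev k) :: tl (rev k)).
  { destruct (rev k) eqn:E. apply (f_equal (@rev nat)) in E. rewrite rev_involutive in E. simpl in E. congruence. reflexivity. }
  rewrite hd_rev in E by auto. rewrite E.
  assert (Ed: exists j d', rev d = j :: d').
  { destruct (rev d) eqn:E2. apply (f_equal (@length nat)) in E2. rewrite length_rev in E2. simpl in E2.
    destruct k; simpl in *; congruence. eauto. }
  destruct Ed as [j [d' Ed]]. rewrite Ed. cbn [addl list_sum]. unfold Zmaj. cbn [hd tl].
  assert (Hl' : length d' = length (tl (rev k))).
  { apply (f_equal (@length nat)) in Ed. rewrite length_rev in Ed. simpl in Ed.
    rewrite tl_rev, length_rev by auto. rewrite (app_removelast_last 0%nat Hk) in Hl. rewrite length_app in Hl. simpl in Hl. lia. }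
  pose proof (lowerR_incr_le (tl (rev k)) d' (pfact a) m Hl' (fun j => Rlt_le _ _ (pfact_pos a j Ha))).
  replace (pred (last k 0%nat + j)) with (pred (last k 0%nat) + j)%nat by lia. rewrite pow_add.
  pose proof (zpref_pos a m Ha).
  assert (0 <= xinv a m ^ pred (last k 0%nat)) by (apply pow_le, Rlt_le, xinv_pos; auto).
  assert (xinv a m ^ j <= (/ a) ^ j) by (apply pow_incr; split; [apply Rlt_le, xinv_pos; auto| apply xinv_le_inv]).
  assert (0 <= xinv a m ^ j) by (apply pow_le, Rlt_le, xinv_pos; auto).
  assert (0 <= lowerR (map (xinv_pow a) (addl (tl (rev k)) d')) (pfact a) m) by (apply lowerR_nonneg; [apply map_xinv_pow_nonneg; auto| intros; apply Rlt_le, pfact_pos; auto]).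
  set (P := zpref a m) in *. set (X1 := xinv a m ^ pred (last k 0%nat)) in *. set (X2 := xinv a m ^ j) in *.
  set (W := lowerR (map (xinv_pow a) (addl (tl (rev k)) d')) (pfact a) m) in *.
  set (W' := lowerR (map (xinv_pow a) (tl (rev k))) (pfact a) m) in *.
  assert (0 <= P * X1) by (apply Rmult_le_pos; lra).
  apply Rle_trans with ((P * X1) * X2 * W). right; ring.
  apply Rle_trans with ((P * X1) * (/ a) ^ j * W). apply Rmult_le_compat_r; auto. apply Rmult_le_compat_l; auto.
  apply Rle_trans with ((P * X1) * (/ a) ^ j * ((/ a) ^ list_sum d' * W')).
  apply Rmult_le_compat_l; auto. apply Rmult_le_pos; auto. apply pow_le, Rlt_le, Rinv_0_lt_compat; auto.
  right. simpl list_sum. rewrite pow_add. ring.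
Qed.

Lemma sum_incr_Zmaj_rev_le k' L m : k' <> [] -> (2 <= last k' 0%nat)%nat -> List.Forall (fun x => (1 <= x)%nat) k' ->
  sum_list (fun t => r ^ list_sum t * Zmaj a (rev (addl k' t)) m) (box (length k') L)
  <= zpref a m * xinv a m ^ (last k' 0%nat - 2) * yinv m * lowerR (map (wgeom) (rev (removelast k'))) (pfact a) m.
Proof.
  intros Hk Hl Hf.
  assert (E : sum_list (fun t => r ^ list_sum t * Zmaj a (rev (addl k' t)) m) (box (length k') L)
     = sum_list (fun t => r ^ list_sum t * Zmaj a (addl (rev k') t) m) (box (length k') L)).
  { transitivity (sum_list (fun t => (fun t => r ^ list_sum t * Zmaj a (addl (rev k') t) m) (rev t)) (box (length k') L)).
    apply sum_list_ext. intros t Ht. apply box_length in Ht. rewrite rev_addl by auto. rewrite list_sum_rev. reflexivity.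
    apply (sum_list_box_rev (fun t => r ^ list_sum t * Zmaj a (addl (rev k') t) m)). }
  rewrite E. rewrite <- length_rev.
  rewrite <- hd_rev, <- tl_rev by auto.
  apply sum_incr_Zmaj_le; auto. rewrite hd_rev; auto. rewrite tl_rev by auto. apply Forall_rev, Forall_removelast; auto.
Qed.

Lemma lowerR_le_scoef ks : List.Forall (fun x => (1 <= x)%nat) ks -> exists A, 0 <= A /\ forall m,
  lowerR (map (xinv_pow a) ks) (pfact a) m <= A * scoef m.
Proof.
  induction ks as [|e ks IH]; intros Hf.
  - exists 1. split. lra. intros m. simpl. rewrite Rmult_1_l. apply pfact_le_scoef.
  - inversion Hf; subst. destruct (IH H2) as [A [HA IHA]].
    exists ((/ a) ^ (e - 1) * A * (kappa / epar)). split.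
    { apply Rmult_le_pos. apply Rmult_le_pos; auto. apply pow_le, Rlt_le, Rinv_0_lt_compat; auto.
      apply Rlt_le, Rdiv_lt_0_compat. apply kappa_pos. apply epar_pos. }
    intros m. cbn [map lowerR].
    assert (Hp : 0 <= (/ a) ^ (e - 1)) by (apply pow_le, Rlt_le, Rinv_0_lt_compat; auto).
    apply Rle_trans with (sum_lt (fun p => yinv p * ((/ a) ^ (e - 1) * A * scoef p)) m).
    { apply sum_lt_le. intros p _. unfold xinv_pow. pose proof (xinv_pow_le e p H1).
      pose proof (IHA p). assert (0 <= lowerR (map (xinv_pow a) ks) (pfact a) p) by
        (apply lowerR_nonneg; [apply map_xinv_pow_nonneg; auto|intros; apply Rlt_le, pfact_pos; auto]).
      pose proof (yinv_pos p). pose proof (scoef_pos p).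
      assert (0 <= xinv a p ^ e) by (apply pow_le, Rlt_le, xinv_pos; auto).
      apply Rle_trans with ((/ a) ^ (e - 1) * yinv p * (A * scoef p)).
      apply Rmult_le_compat; auto. right; ring. }
    eapply Rle_trans. apply sum_yinv_le_Phi; auto. intros; apply Rmult_le_pos. nra. apply Rlt_le, scoef_pos; auto.
    apply Phi_le_scoef; auto. nra. intros; lra.
Qed.

Lemma Zmaj_le_dom kr : (2 <= hd 0%nat kr)%nat -> List.Forall (fun x => (1 <= x)%nat) (tl kr) ->
  exists C, 0 <= C /\ forall m, Zmaj a kr m <= C * dom m.
Proof.
  intros Hh Hf. destruct (lowerR_le_scoef _ Hf) as [A [HA HAm]].
  exists ((/ a) ^ (pred (hd 0%nat kr) - 1) * A). split.
  apply Rmult_le_pos; auto. apply pow_le, Rlt_le, Rinv_0_lt_compat; auto.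
  intros m. unfold Zmaj, dom. pose proof (xinv_pow_le (pred (hd 0%nat kr)) m ltac:(lia)).
  pose proof (zpref_pos a m Ha). pose proof (HAm m).
  assert (0 <= lowerR (map (xinv_pow a) (tl kr)) (pfact a) m) by
        (apply lowerR_nonneg; [apply map_xinv_pow_nonneg; auto|intros; apply Rlt_le, pfact_pos; auto]).
  assert (0 <= xinv a m ^ pred (hd 0%nat kr)) by (apply pow_le, Rlt_le, xinv_pos; auto).
  pose proof (yinv_pos m). pose proof (scoef_pos m).
  apply Rle_trans with (zpref a m * ((/ a) ^ (pred (hd 0%nat kr) - 1) * yinv m) * (A * scoef m)).
  apply Rmult_le_compat; auto. apply Rmult_le_pos; lra. apply Rmult_le_compat_l; lra.
  right; ring.
Qed.

Lemma Zmaj_rev_le_dom K : admissible K -> exists C, 0 <= C /\ forall m, Zmaj a (rev K) m <= C * dom m.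
Proof.
  intros [HK [Hf Hl]]. apply Forall_forall in Hf. apply Zmaj_le_dom.
  - rewrite hd_rev; auto.
  - rewrite tl_rev by auto. apply Forall_rev, Forall_removelast; auto.
Qed.

(* A real majorant of the m-th summand of the l-th term (alpha - beta)^l (coef_of N kk alpha l)
   (Cmod_term_le_coef_majorant). *)
Definition term_majorant (N : nat) (kk : list nat -> list nat) (l m : nat) : R :=
  r ^ l * sum_lt (fun i => sum_list (fun u => sum_list (fun t => Zmaj a (rev (addl (kk u) t)) m)
       (comps (length (kk u)) (l - i))) (comps N i)) (S l).

Definition term_majorants_dominated (N : nat) (kk : list nat -> list nat) : Prop :=
  exists C, 0 <= C /\ forall L m, sum_lt (fun l => term_majorant N kk l m) L <= C * dom m.

Lemma coef1_majorant_sum k : admissible k -> term_majorants_dominated (pred (length k)) (ins_ones k).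
Proof.
  intros [Hk [Hf Hl]]. apply Forall_forall in Hf.
  destruct (sum_ones_lowerR_le k Hk Hf) as [D [HD HC]].
  exists ((/ a) ^ (last k 0%nat - 2) * D). split.
  apply Rmult_le_pos; auto. apply pow_le, Rlt_le, Rinv_0_lt_compat; auto.
  intros L m. unfold term_majorant.
  eapply Rle_trans. apply (sum_double_comps_le r (pred (length k)) (fun is => length (ins_ones k is))
     (fun is t => Zmaj a (rev (addl (ins_ones k is) t)) m)). lra. intros; apply Zmaj_nonneg; auto.
  eapply Rle_trans.
  apply sum_list_le with (g := fun is => r ^ list_sum is * (zpref a m * xinv a m ^ (last k 0%nat - 2) * yinv m *
     lowerR (map (wgeom) (rev (removelast (ins_ones k is)))) (pfact a) m)).
  { intros is _. apply Rmult_le_compat_l. apply pow_le; lra.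
    pose proof (sum_incr_Zmaj_rev_le (ins_ones k is) L m (ins_ones_nonnil k is Hk)). rewrite last_ins_ones in H.
    apply H; auto. apply Forall_ins_ones; auto. }
  rewrite (sum_list_ext _ (fun is => (zpref a m * xinv a m ^ (last k 0%nat - 2) * yinv m) *
     (r ^ list_sum is * lowerR (map (wgeom) (rev (removelast (ins_ones k is)))) (pfact a) m))).
  2:{ intros; ring. }
  rewrite sum_list_scal.
  pose proof (HC (pfact a) 1 L m ltac:(lra)).
  assert (H1 : forall j, 0 <= pfact a j <= 1 * scoef j).
  { intros j. split. apply Rlt_le, pfact_pos; auto. rewrite Rmult_1_l. apply pfact_le_scoef; auto. }
  specialize (H H1).
  pose proof (zpref_pos a m Ha). pose proof (yinv_pos m). pose proof (scoef_pos m).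
  assert (Hx : xinv a m ^ (last k 0%nat - 2) <= (/ a) ^ (last k 0%nat - 2)).
  { apply pow_incr. split. apply Rlt_le, xinv_pos; auto. apply xinv_le_inv. }
  assert (0 <= xinv a m ^ (last k 0%nat - 2)) by (apply pow_le, Rlt_le, xinv_pos; auto).
  assert (0 <= sum_list (fun is => r ^ list_sum is * lowerR (map (wgeom) (rev (removelast (ins_ones k is)))) (pfact a) m)
       (box (pred (length k)) L)).
  { apply sum_list_nonneg. intros. apply Rmult_le_pos. apply pow_le; lra. apply lowerR_nonneg.
    apply map_wgeom_nonneg; auto. intros; apply Rlt_le, pfact_pos; auto. }
  unfold dom.
  apply Rle_trans with ((zpref a m * (/ a) ^ (last k 0%nat - 2) * yinv m) * (1 * D * scoef m)).
  apply Rmult_le_compat; auto. apply Rmult_le_pos; [|lra]. apply Rmult_le_pos; lra.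
  apply Rmult_le_compat_r. lra. apply Rmult_le_compat_l; lra.
  right; ring.
Qed.

Lemma sum_coef2_majorant_le_Zmaj k L m : admissible k ->
  sum_lt (fun l => term_majorant (list_sum (blens k)) (fun u => addl k (blocks (blens k) u)) l m) L
  <= (/ (1 - r / a)) ^ (list_sum (blens k) + length k) * Zmaj a (rev k) m.
Proof.
  intros [Hk [Hf Hl]]. unfold term_majorant.
  set (q := r / a).
  assert (Hq : 0 <= q < 1).
  { unfold q. split. apply Rdiv_le_0_compat; lra. apply Rmult_lt_reg_r with a; auto. unfold Rdiv.
    rewrite Rmult_assoc, Rinv_l; lra. }
  eapply Rle_trans. apply (sum_double_comps_le r (list_sum (blens k)) (fun u => length (addl k (blocks (blens k) u)))
     (fun u t => Zmaj a (rev (addl (addl k (blocks (blens k) u)) t)) m)). lra. intros; apply Zmaj_nonneg; auto.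
  set (Z := Zmaj a (rev k) m). assert (HZ : 0 <= Z) by (apply Zmaj_nonneg; auto).
  eapply Rle_trans.
  apply sum_list_le with (g := fun u => sum_list (fun t => q ^ list_sum u * q ^ list_sum t * Z) (box (length k) L)).
  { intros u Hu. apply box_length in Hu. rewrite length_addl. rewrite <- sum_list_scal. apply sum_list_le.
    intros t Ht. apply box_length in Ht.
    assert (Hb : length (blocks (blens k) u) = length k) by (rewrite blocks_length, blens_length; auto).
    rewrite addl_assoc by lia.
    pose proof (Zmaj_incr_le k (addl (blocks (blens k) u) t) m Hk ltac:(rewrite length_addl; lia) ltac:(lia)).
    rewrite list_sum_addl in H by lia. rewrite blocks_sum in H by lia.
    fold Z in H. unfold q. rewrite !Rdiv_def, !Rpow_mult_distr. rewrite pow_add in H.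
    apply Rle_trans with (r ^ list_sum u * (r ^ list_sum t * ((/ a) ^ list_sum u * (/ a) ^ list_sum t * Z))).
    apply Rmult_le_compat_l. apply pow_le; lra. apply Rmult_le_compat_l. apply pow_le; lra. auto.
    right; ring. }
  rewrite (sum_list_ext _ (fun u => q ^ list_sum u * (Z * (sum_lt (fun j => q ^ j) L) ^ length k))).
  2:{ intros u _. rewrite <- sum_box_geom, <- !sum_list_scal. apply sum_list_ext. intros; ring. }
  rewrite (sum_list_ext _ (fun u => (Z * (sum_lt (fun j => q ^ j) L) ^ length k) * q ^ list_sum u)) by (intros; ring).
  rewrite sum_list_scal, sum_box_geom. rewrite pow_add.
  pose proof (sum_lt_geom q L Hq). assert (0 <= sum_lt (fun j => q ^ j) L) by (apply sum_lt_nonneg; intros; apply pow_le; lra).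
  assert (sum_lt (fun j => q ^ j) L ^ length k <= (/ (1 - q)) ^ length k) by (apply pow_incr; lra).
  assert (sum_lt (fun j => q ^ j) L ^ list_sum (blens k) <= (/ (1 - q)) ^ list_sum (blens k)) by (apply pow_incr; lra).
  assert (0 <= sum_lt (fun j => q ^ j) L ^ length k) by (apply pow_le; lra).
  assert (0 <= sum_lt (fun j => q ^ j) L ^ list_sum (blens k)) by (apply pow_le; lra).
  assert (0 <= (/ (1 - q)) ^ length k) by lra.
  apply Rle_trans with (Z * (/ (1 - q)) ^ length k * (/ (1 - q)) ^ list_sum (blens k)).
  apply Rmult_le_compat; auto. apply Rmult_le_pos; auto. apply Rmult_le_compat_l; auto.
  right; ring.
Qed.

Lemma coef2_majorant_sum k : admissible k ->
  term_majorants_dominated (list_sum (blens k)) (fun u => addl k (blocks (blens k) u)).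
Proof.
  intros Hk. destruct (Zmaj_rev_le_dom k Hk) as [C [HC HCm]].
  assert (Hq : 0 < / (1 - r / a)).
  { apply Rinv_0_lt_compat. enough (r / a < 1) by lra. apply Rlt_div_l; lra. }
  set (q := (/ (1 - r / a)) ^ (list_sum (blens k) + length k)).
  assert (0 <= q) by (apply pow_le; lra).
  exists (q * C). split. apply Rmult_le_pos; auto.
  intros L m. eapply Rle_trans. apply sum_coef2_majorant_le_Zmaj; auto.
  rewrite Rmult_assoc. apply Rmult_le_compat_l; auto.
Qed.

End Majorant.

(** * Series *)

Lemma sum_n_sum_lt f n : sum_n f n = sum_lt f (S n).
Proof.
  induction n. rewrite sum_O. unfold sum_lt; simpl. lra.
  rewrite sum_Sn, IHn, (sum_lt_S f (S n)). reflexivity.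
Qed.

Lemma Series_zero : Series (fun _ => 0) = 0.
Proof.
  rewrite (Series_ext _ (fun n => 0 * 0)) by (intros; ring).
  rewrite (Series_scal_l 0 (fun _ => 0)). ring.
Qed.

Lemma ex_series_zero : ex_series (fun _ : nat => 0).
Proof. exists 0. apply filterlim_ext with (fun _ => 0). intros n. rewrite sum_n_sum_lt. rewrite sum_lt_zero. reflexivity.
  apply filterlim_const. Qed.

Lemma sum_list_Series {A} (f : A -> nat -> R) s : (forall x, In x s -> ex_series (f x)) ->
  ex_series (fun m => sum_list (fun x => f x m) s) /\
  Series (fun m => sum_list (fun x => f x m) s) = sum_list (fun x => Series (f x)) s.
Proof.
  induction s; intros H; simpl.
  - split. apply ex_series_zero. apply Series_zero.
  - destruct IHs as [E1 E2]. intros; apply H; simpl; auto.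
    assert (E0 : ex_series (f a)) by (apply H; simpl; auto).
    split. apply (ex_series_plus (f a) _ E0 E1).
    rewrite Series_plus; auto. rewrite E2. reflexivity.
Qed.

Lemma sum_lt_Series (f : nat -> nat -> R) n : (forall i, (i < n)%nat -> ex_series (f i)) ->
  ex_series (fun m => sum_lt (fun i => f i m) n) /\
  Series (fun m => sum_lt (fun i => f i m) n) = sum_lt (fun i => Series (f i)) n.
Proof.
  intros H. apply sum_list_Series. intros x Hx. apply in_seq in Hx. apply H. lia.
Qed.

Lemma ex_series_scal_R c (f : nat -> R) : ex_series f -> ex_series (fun m => c * f m).
Proof. intros H. apply (ex_series_scal_l c f H). Qed.

Lemma ex_series_bounded (f : nat -> R) B : (forall m, 0 <= f m) -> (forall M, sum_lt f M <= B) ->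
  ex_series f /\ Series f <= B.
Proof.
  intros H0 HB.
  assert (Hl : ex_finite_lim_seq (sum_n f)).
  { apply ex_finite_lim_seq_incr with B. intros n. rewrite !sum_n_sum_lt, (sum_lt_S f (S n)). specialize (H0 (S n)). lra.
    intros n. rewrite sum_n_sum_lt. auto. }
  destruct Hl as [l Hl].
  assert (Hs : is_series f l) by exact Hl.
  split. exists l; auto.
  rewrite (is_series_unique f l Hs).
  assert (Rbar_le l B). apply (is_lim_seq_le (sum_n f) (fun _ => B) l B). intros; rewrite sum_n_sum_lt; auto.
  auto. apply is_lim_seq_const. simpl in H. auto.
Qed.

Lemma ex_series_le_nonneg (f g : nat -> R) : (forall m, 0 <= f m <= g m) -> ex_series g -> ex_series f.
Proof.
  intros H Hg. apply (ex_series_le f g); auto. intros n. change (norm (f n)) with (Rabs (f n)).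
  rewrite Rabs_right. apply H. apply Rle_ge, H.
Qed.

Lemma ex_series_shift (f : nat -> R) n : ex_series f -> ex_series (fun k => f (k + n)%nat).
Proof.
  intros H. induction n.
  - revert H. apply ex_series_ext. intros; f_equal; lia.
  - apply ex_series_incr_1 in IHn. revert IHn. apply ex_series_ext. intros; f_equal; lia.
Qed.

Lemma Series_shift (f : nat -> R) n : ex_series f -> Series f = sum_lt f n + Series (fun k => f (k + n)%nat).
Proof.
  intros H. induction n.
  - rewrite sum_lt_0. rewrite Rplus_0_l. apply Series_ext. intros; f_equal; lia.
  - rewrite IHn. rewrite (Series_incr_1 (fun k => f (k + n)%nat)) by (apply ex_series_shift; auto).
    rewrite (sum_lt_S f n). simpl (0 + n)%nat. rewrite Rplus_assoc. f_equal. f_equal.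
    apply Series_ext. intros; f_equal; lia.
Qed.

Lemma Series_tail_le (a M : nat -> R) n : ex_series M -> (forall l, Rabs (a l) <= M l) ->
  ex_series a /\ Rabs (Series a - sum_lt a n) <= Series M - sum_lt M n.
Proof.
  intros HM H.
  assert (Ha : ex_series (fun l => Rabs (a l))).
  { apply ex_series_le_nonneg with M; auto. intros; split; auto. apply Rabs_pos. }
  assert (Ha' : ex_series a) by (apply ex_series_Rabs; auto).
  split; auto.
  rewrite (Series_shift a n Ha'), (Series_shift M n HM).
  replace (sum_lt a n + Series (fun k => a (k + n)%nat) - sum_lt a n) with (Series (fun k => a (k + n)%nat)) by ring.
  replace (sum_lt M n + Series (fun k => M (k + n)%nat) - sum_lt M n) with (Series (fun k => M (k + n)%nat)) by ring.
  eapply Rle_trans. apply Series_Rabs. apply (ex_series_shift (fun l => Rabs (a l))); auto.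
  apply Series_le. intros; split. apply Rabs_pos. auto. apply ex_series_shift; auto.
Qed.

Lemma Series_tail_lt M : ex_series M -> forall eps, 0 < eps -> exists N, forall n, (N <= n)%nat -> Series M - sum_lt M n < eps.
Proof.
  intros HM eps Heps. pose proof (Series_correct M HM) as H. apply is_series_Reals in H.
  destruct (H eps Heps) as [N HN]. exists (S N). intros n Hn.
  destruct n. lia. specialize (HN n ltac:(lia)). unfold R_dist in HN.
  rewrite <- sum_n_sum_lt. rewrite sum_n_Reals. apply Rabs_lt_between' in HN. lra.
Qed.

Lemma Cmod_le_Rabs_sum (z : C) : Cmod z <= Rabs (fst z) + Rabs (snd z).
Proof.
  destruct z as [x y]. unfold Cmod. simpl.
  rewrite <- (sqrt_Rsqr (Rabs x + Rabs y)) by (pose proof (Rabs_pos x); pose proof (Rabs_pos y); lra).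
  apply sqrt_le_1_alt. unfold Rsqr. pose proof (pow2_abs x). pose proof (pow2_abs y). simpl in *.
  pose proof (Rabs_pos x); pose proof (Rabs_pos y). nra.
Qed.

Lemma im_le_Cmod (z : C) : Rabs (snd z) <= Cmod z.
Proof.
  destruct z as [x y]. unfold Cmod. simpl. rewrite <- sqrt_Rsqr_abs. apply sqrt_le_1_alt.
  unfold Rsqr. nra.
Qed.

Lemma fst_clsum {A} (f : A -> C) s : fst (clsum (map f s)) = sum_list (fun x => fst (f x)) s.
Proof. induction s; simpl; auto. rewrite <- IHs. reflexivity. Qed.

Lemma snd_clsum {A} (f : A -> C) s : snd (clsum (map f s)) = sum_list (fun x => snd (f x)) s.
Proof. induction s; simpl; auto. rewrite <- IHs. reflexivity. Qed.

Lemma unif_conv_series_majorant (K : C -> Prop) (a : nat -> C -> C) (M : nat -> R) :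
  ex_series M -> (forall z, K z -> forall l, Cmod (a l z) <= M l) -> unif_conv_series K a.
Proof.
  intros HM H.
  exists (fun z => (Series (fun l => fst (a l z)), Series (fun l => snd (a l z)))).
  intros eps Heps. destruct (Series_tail_lt M HM (eps / 2) ltac:(lra)) as [N HN].
  exists N. intros n Hn z Hz.
  eapply Rle_lt_trans. apply Cmod_le_Rabs_sum.
  destruct (Series_tail_le (fun l => fst (a l z)) M n HM) as [_ H1].
  { intros l. eapply Rle_trans. apply (re_le_Cmod (a l z)). auto. }
  destruct (Series_tail_le (fun l => snd (a l z)) M n HM) as [_ H2].
  { intros l. eapply Rle_trans. apply (im_le_Cmod (a l z)). auto. }
  specialize (HN n Hn). unfold csum.
  simpl. rewrite fst_clsum, snd_clsum. fold (sum_lt (fun l => fst (a l z)) n). fold (sum_lt (fun l => snd (a l z)) n).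
  unfold Rminus in H1, H2. lra.
Qed.

Lemma ex_series_Cmod_majorant (a : nat -> C) (M : nat -> R) : ex_series M -> (forall l, Cmod (a l) <= M l) ->
  ex_series (fun l => Cmod (a l)).
Proof. intros HM H. apply ex_series_le_nonneg with M; auto. intros; split; auto. apply Cmod_ge_0. Qed.

Lemma Cmod_Zfun_le k alpha (Z : nat -> R) : ex_series Z -> (forall m, Cmod (Zterm k alpha m) <= Z m) ->
  Cmod (Zfun k alpha) <= 2 * Series Z.
Proof.
  intros HZ H. unfold Zfun. eapply Rle_trans. apply Cmod_le_Rabs_sum. cbn [fst snd].
  assert (E1 : ex_series (fun m => Rabs (fst (Zterm k alpha m)))).
  { apply ex_series_le_nonneg with Z; auto. intros; split. apply Rabs_pos. eapply Rle_trans. apply re_le_Cmod. auto. }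
  assert (E2 : ex_series (fun m => Rabs (snd (Zterm k alpha m)))).
  { apply ex_series_le_nonneg with Z; auto. intros; split. apply Rabs_pos. eapply Rle_trans. apply im_le_Cmod. auto. }
  pose proof (Series_Rabs _ E1). pose proof (Series_Rabs _ E2). cbv beta in H0, H1.
  assert (Series (fun m => Rabs (fst (Zterm k alpha m))) <= Series Z).
  { apply Series_le; auto. intros; split. apply Rabs_pos. eapply Rle_trans. apply re_le_Cmod. auto. }
  assert (Series (fun m => Rabs (snd (Zterm k alpha m))) <= Series Z).
  { apply Series_le; auto. intros; split. apply Rabs_pos. eapply Rle_trans. apply im_le_Cmod. auto. }
  lra.
Qed.

Lemma open_disk (b : C) (rad : R) : open (fun z => Cmod (Cminus z b) < rad).
Proof.
  intros x Hx. apply (locally_le_locally_norm (x : C)).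
  set (d := (rad - Cmod (Cminus x b)) / 2).
  assert (Hd : 0 < d) by (unfold d; lra).
  exists (mkposreal d Hd). intros y Hy. unfold ball_norm in Hy. simpl in Hy.
  change (norm (minus y x)) with (Cmod (Cminus y x)) in Hy.
  replace (Cminus y b) with (Cplus (Cminus y x) (Cminus x b)) by ring.
  eapply Rle_lt_trans. apply Cmod_triangle. unfold d in Hy. lra.
Qed.

Lemma Series_nested_sums (c : R) (n : nat) (S1 : nat -> list (list nat)) (S2 : nat -> list nat -> list (list nat))
  (F : list nat -> list nat -> nat -> R) :
  (forall i u t, (i < n)%nat -> In u (S1 i) -> In t (S2 i u) -> ex_series (F u t)) ->
  ex_series (fun m => c * sum_lt (fun i => sum_list (fun u => sum_list (fun t => F u t m) (S2 i u)) (S1 i)) n) /\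
  Series (fun m => c * sum_lt (fun i => sum_list (fun u => sum_list (fun t => F u t m) (S2 i u)) (S1 i)) n)
  = c * sum_lt (fun i => sum_list (fun u => sum_list (fun t => Series (F u t)) (S2 i u)) (S1 i)) n.
Proof.
  intros H.
  assert (Hin : forall i u, (i < n)%nat -> In u (S1 i) ->
     ex_series (fun m => sum_list (fun t => F u t m) (S2 i u)) /\
     Series (fun m => sum_list (fun t => F u t m) (S2 i u)) = sum_list (fun t => Series (F u t)) (S2 i u)).
  { intros i u Hi Hu. apply sum_list_Series. intros t Ht. apply (H i u t); auto. }
  assert (Hmid : forall i, (i < n)%nat ->
     ex_series (fun m => sum_list (fun u => sum_list (fun t => F u t m) (S2 i u)) (S1 i)) /\
     Series (fun m => sum_list (fun u => sum_list (fun t => F u t m) (S2 i u)) (S1 i)) =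
       sum_list (fun u => sum_list (fun t => Series (F u t)) (S2 i u)) (S1 i)).
  { intros i Hi. destruct (sum_list_Series (fun u m => sum_list (fun t => F u t m) (S2 i u)) (S1 i)) as [E1 E2].
    intros u Hu. apply Hin; auto. split; auto. rewrite E2. apply sum_list_ext. intros u Hu. apply Hin; auto. }
  destruct (sum_lt_Series (fun i m => sum_list (fun u => sum_list (fun t => F u t m) (S2 i u)) (S1 i)) n) as [E1 E2].
  intros i Hi. apply Hmid; auto.
  split. apply ex_series_scal_R; auto.
  rewrite Series_scal_l. f_equal. rewrite E2. apply sum_lt_ext. intros i Hi. apply Hmid; auto.
Qed.

Lemma Series_nonneg (f : nat -> R) : ex_series f -> (forall m, 0 <= f m) -> 0 <= Series f.
Proof. intros H H0. rewrite <- Series_zero. apply Series_le; auto. intros n; split; [lra|apply H0]. Qed.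

(** * Majorants of the two series *)

Lemma dom_summable a r : 0 < a -> 0 <= r < a -> ex_series (dom a r) /\ Series (dom a r) <= dom_bound a r.
Proof. intros Ha Hr. apply ex_series_bounded; intros; [apply dom_nonneg | apply sum_dom_le]; auto. Qed.

Lemma Zmaj_summable a K : 0 < a -> admissible K -> ex_series (Zmaj a (rev K)).
Proof.
  intros Ha HK. assert (Hr : 0 <= 0 < a) by lra.
  destruct (Zmaj_rev_le_dom a 0 Ha Hr K HK) as [C [HC HCm]].
  apply ex_series_le_nonneg with (fun m => C * dom a 0 m).
  - intros m. split; auto. apply Zmaj_nonneg; auto.
  - apply ex_series_scal_R, dom_summable; auto.
Qed.

(* coef1 k is convertibly coef_of (pred (length k)) (ins_ones k), and coef2 k is
   coef_of (list_sum (blens k)) (fun u => addl k (blocks (blens k) u)). *)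
Definition coef_of (N : nat) (kk : list nat -> list nat) (alpha : C) (l : nat) : C :=
  csum (fun i => clsum (map (fun u => Ssum (l - i) (kk u) alpha) (comps N i))) (S l).

Section CoefMajorant.
Variables (a r : R) (N : nat) (kk : list nat -> list nat).
Hypothesis Ha : 0 < a.
Hypothesis Hr : 0 <= r < a.
Hypothesis Hkk : forall u, admissible (kk u).

Definition coef_majorant (l : nat) : R := 2 * Series (term_majorant a r N kk l).

Lemma Series_term_majorant l : ex_series (term_majorant a r N kk l) /\
  Series (term_majorant a r N kk l) = r ^ l * sum_lt (fun i => sum_list (fun u => sum_list
    (fun t => Series (Zmaj a (rev (addl (kk u) t)))) (comps (length (kk u)) (l - i))) (comps N i)) (S l).
Proof.
  apply (Series_nested_sums (r ^ l) (S l) (comps N) (fun i u => comps (length (kk u)) (l - i))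
    (fun u t => Zmaj a (rev (addl (kk u) t)))).
  intros i u t _ _ _. apply Zmaj_summable, admissible_addl; auto.
Qed.

Lemma Cmod_coef_of_le alpha l : a <= Re alpha ->
  Cmod (coef_of N kk alpha l) <= 2 * sum_lt (fun i => sum_list (fun u => sum_list
    (fun t => Series (Zmaj a (rev (addl (kk u) t)))) (comps (length (kk u)) (l - i))) (comps N i)) (S l).
Proof.
  intros Hre. unfold coef_of. eapply Rle_trans. apply Cmod_csum.
  rewrite <- sum_lt_scal. apply sum_lt_le. intros i _.
  eapply Rle_trans. apply Cmod_clsum. rewrite <- sum_list_scal. apply sum_list_le. intros u _.
  unfold Ssum. eapply Rle_trans. apply Cmod_clsum. rewrite <- sum_list_scal. apply sum_list_le. intros t Ht.
  apply in_comps in Ht. destruct Ht as [Ht _].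
  apply Cmod_Zfun_le.
  - apply Zmaj_summable, admissible_addl; auto.
  - intros m. apply Cmod_Zterm_le; auto. apply addl_nonnil, Hkk.
Qed.

Lemma Cmod_term_le_coef_majorant beta alpha l : Cmod (Cminus alpha beta) <= r -> a <= Re alpha ->
  Cmod (Cmult (Cpow (Cminus alpha beta) l) (coef_of N kk alpha l)) <= coef_majorant l.
Proof.
  intros Hd Hre. unfold coef_majorant. rewrite Cmod_mult, (proj2 (Series_term_majorant l)).
  assert (Hpow : Cmod (Cpow (Cminus alpha beta) l) <= r ^ l).
  { rewrite Cmod_pow. apply pow_incr. split; auto. apply Cmod_ge_0. }
  pose proof (Cmod_coef_of_le alpha l Hre).
  eapply Rle_trans. apply Rmult_le_compat; eauto using Cmod_ge_0.
  right; ring.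
Qed.

Lemma coef_majorant_summable : term_majorants_dominated a r N kk -> ex_series coef_majorant.
Proof.
  intros [C [HC HS]].
  assert (HQ : forall l, ex_series (term_majorant a r N kk l)) by (intros; apply Series_term_majorant).
  assert (HQ0 : forall l m, 0 <= term_majorant a r N kk l m).
  { intros l m. unfold term_majorant. apply Rmult_le_pos. apply pow_le; lra.
    apply sum_lt_nonneg; intros. apply sum_list_nonneg; intros. apply sum_list_nonneg; intros.
    apply Zmaj_nonneg; auto. }
  destruct (dom_summable a r Ha Hr) as [Hdom Hdom_le].
  apply ex_series_bounded with (2 * (C * dom_bound a r)).
  - intros l. apply Rmult_le_pos. lra. apply Series_nonneg; auto.
  - intros L. unfold coef_majorant. rewrite sum_lt_scal. apply Rmult_le_compat_l. lra.
    destruct (sum_lt_Series (term_majorant a r N kk) L) as [E1 E2]; auto. rewrite <- E2.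
    apply Rle_trans with (Series (fun m => C * dom a r m)).
    + apply Series_le; [|apply ex_series_scal_R; auto].
      intros m. split; auto. apply sum_lt_nonneg; auto.
    + rewrite Series_scal_l. apply Rmult_le_compat_l; auto.
Qed.

End CoefMajorant.

Lemma Re_lower (alpha beta : C) : Re beta - Cmod (Cminus alpha beta) <= Re alpha.
Proof.
  pose proof (re_le_Cmod (Cminus alpha beta)).
  assert (E : Re (Cminus alpha beta) = Re alpha - Re beta) by (unfold Re, Cminus; simpl; ring).
  rewrite E in H. apply Rabs_le_between in H. lra.
Qed.

Lemma coef_of_majorant_disc N kk beta r : 0 <= r < Re beta / 2 -> (forall u, admissible (kk u)) ->
  (forall a, 0 < a -> 0 <= r < a -> term_majorants_dominated a r N kk) ->
  exists M, ex_series M /\ forall alpha, Cmod (Cminus alpha beta) <= r -> forall l,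
    Cmod (Cmult (Cpow (Cminus alpha beta) l) (coef_of N kk alpha l)) <= M l.
Proof.
  intros Hr Hkk Hdom. set (a := Re beta - r).
  assert (Ha : 0 < a) by (unfold a; lra). assert (Hra : 0 <= r < a) by (unfold a; lra).
  exists (coef_majorant a r N kk). split.
  - apply coef_majorant_summable; auto.
  - intros alpha Hd l. apply Cmod_term_le_coef_majorant; auto.
    pose proof (Re_lower alpha beta). unfold a. lra.
Qed.

Lemma nat_gt x : exists n : nat, x < INR n.
Proof.
  destruct (archimed x) as [H _]. destruct (Z_le_gt_dec 0 (up x)).
  - exists (Z.to_nat (up x)). rewrite INR_IZR_INZ, Z2Nat.id by lia. lra.
  - exists 0%nat. simpl. apply Z.gt_lt in g. apply IZR_lt in g. lra.
Qed.

(* The discs of radii c - c/(i+2) cover the open disc of radius c. *)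

Lemma compact_in_smaller_disc (K : C -> Prop) (b : C) (c : R) : compactC K -> 0 < c ->
  (forall z, K z -> Cmod (Cminus z b) < c) ->
  exists r, 0 <= r < c /\ forall z, K z -> Cmod (Cminus z b) <= r.
Proof.
  intros HK Hc HKc.
  destruct (HK nat (fun i z => Cmod (Cminus z b) < c - c / (INR i + 2))) as [s Hs].
  { intros i. apply open_disk. }
  { intros z Hz. set (d := c - Cmod (Cminus z b)).
    assert (Hd : 0 < d) by (unfold d; specialize (HKc z Hz); lra).
    destruct (nat_gt (c / d)) as [n Hn]. exists n. pose proof (pos_INR n).
    enough (c / (INR n + 2) < d) by (unfold d in *; lra).
    apply Rlt_div_l; [lra|]. apply Rlt_div_l in Hn; [|lra]. nra. }
  set (N := list_max s). exists (c - c / (INR N + 2)).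
  assert (Hpos : 0 < c / (INR N + 2) <= c / 2).
  { pose proof (pos_INR N). split. apply Rdiv_lt_0_compat; lra.
    apply Rmult_le_compat_l; [lra|]. apply Rinv_le_contravar; lra. }
  split; [lra|]. intros z Hz. destruct (Hs z Hz) as [i [Hi Hiz]].
  assert (HiN : (i <= N)%nat).
  { assert (Hf : List.Forall (fun j => (j <= N)%nat) s) by (apply list_max_le; lia).
    rewrite Forall_forall in Hf. auto. }
  apply le_INR in HiN.
  assert (c / (INR N + 2) <= c / (INR i + 2)).
  { apply Rmult_le_compat_l; [lra|]. apply Rinv_le_contravar; pose proof (pos_INR i); lra. }
  lra.
Qed.

Lemma conv_of_disc_majorants (beta : C) (u : nat -> C -> C) : 0 < Re beta ->
  (forall r, 0 <= r < Re beta / 2 -> exists M, ex_series M /\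
     forall z, Cmod (Cminus z beta) <= r -> forall l, Cmod (u l z) <= M l) ->
  (forall alpha, Dbeta beta alpha -> ex_series (fun l => Cmod (u l alpha))) /\
  (forall K, compactC K -> (forall z, K z -> Dbeta beta z) -> unif_conv_series K u).
Proof.
  intros Hb Hmaj. split.
  - intros alpha Hd. destruct (Hmaj (Cmod (Cminus alpha beta))) as [M [HM HMb]].
    { split; [apply Cmod_ge_0 | exact Hd]. }
    apply ex_series_Cmod_majorant with M; auto. apply HMb, Rle_refl.
  - intros K HK HKD. destruct (compact_in_smaller_disc K beta (Re beta / 2) HK) as [r [Hr HKr]]; auto.
    { lra. }
    destruct (Hmaj r Hr) as [M [HM HMb]].
    apply unif_conv_series_majorant with M; auto.
Qed.

Theorem lemma3p1 (k : list nat) (beta : C) :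
  admissible k -> 0 < Re beta ->
  (forall alpha, Dbeta beta alpha ->
     ex_series (fun l => Cmod (sterm coef1 k beta alpha l)) /\
     ex_series (fun l => Cmod (sterm coef2 k beta alpha l))) /\
  (forall K : C -> Prop, compactC K -> (forall z, K z -> Dbeta beta z) ->
     unif_conv_series K (fun l z => sterm coef1 k beta z l) /\
     unif_conv_series K (fun l z => sterm coef2 k beta z l)).
Proof.
  intros Hk Hb.
  destruct (conv_of_disc_majorants beta (fun l z => sterm coef1 k beta z l) Hb) as [Abs1 Unif1].
  { intros r Hr. apply (coef_of_majorant_disc (pred (length k)) (ins_ones k) beta r Hr).
    - intros is. apply admissible_ins_ones; auto.
    - intros a Ha Hra. apply coef1_majorant_sum; auto. }
  destruct (conv_of_disc_majorants beta (fun l z => sterm coef2 k beta z l) Hb) as [Abs2 Unif2].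
  { intros r Hr. apply (coef_of_majorant_disc (list_sum (blens k)) (fun u => addl k (blocks (blens k) u)) beta r Hr).
    - intros u. apply admissible_addl; auto.
    - intros a Ha Hra. apply coef2_majorant_sum; auto. }
  split; intros; split; auto.
Qed.
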